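(* Let $\omega^{(1)}=(2,2,1)$, $\omega^{(2)}=(2,4)$, $\omega^{(3)}=(4,1,1)$, $\omega^{(4)}=(4,3)$, $\omega^{(5)}=(6,2)$. Then for $j=1,2,3,4,5$ respectively: $\dim(QP^{\otimes7}_{10})^{>0}(\omega^{(j)})=0,0,0,20,35$; $\dim(QP^{\otimes8}_{10})^{>0}(\omega^{(j)})=0,0,0,0,20$; and $\dim(QP^{\otimes h}_{10})^{>0}(\omega^{(j)})=0$ for all $j$ whenever $h\ge9$.
   Context: $P^{\otimes h}=\mathbb F_2[t_1,\dots,t_h]$ ($\deg t_i=1$) with the standard action of the mod 2 Steenrod algebra $\mathcal A$ ($\overline{\mathcal A}$ its positive-degree part). The weight vector of $t=t_1^{a_1}\cdots t_h^{a_h}$ is $\omega(t)$ with $\omega_i(t)=\sum_j\alpha_{i-1}(a_j)$, $\alpha_k(a)$ the $k$-th binary digit; weight vectors are ordered left-lexicographically. $(P^{\otimes h})^{>0}$ is the $\mathcal A$-submodule spanned by monomials with all exponents positive. For a weight vector $\omega$ of degree $n$, $(P^{\otimes h}_n)^{>0}(\omega)$ (resp. $(<\omega)$) is spanned by degree-$n$ monomials of $(P^{\otimes h})^{>0}$ with $\omega(t)\le\omega$ (resp. $<\omega$), and $(QP^{\otimes h}_n)^{>0}(\omega)$ is the quotient of $(P^{\otimes h}_n)^{>0}(\omega)$ by $(\overline{\mathcal A}(P^{\otimes h})^{>0}\cap(P^{\otimes h}_n)^{>0}(\omega))+(P^{\otimes h}_n)^{>0}(<\omega)$. *)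

From HB Require Import structures.
From mathcomp Require Import all_boot all_order all_algebra.
Set Implicit Arguments. Unset Strict Implicit. Unset Printing Implicit Defensive.
Import GRing.Theory.
Local Open Scope ring_scope.

(* Monomials t_1^{a_1}...t_h^{a_h} of degree n of (P^{(x)h})^{>0}:
   exponent functions 'I_h -> nat with all a_j > 0 and sum n
   (each exponent is then <= n, so it fits in 'I_n.+1). *)
Definition posmon_pred (h n : nat) : pred {ffun 'I_h -> 'I_n.+1} :=
  fun f => [forall j, (0 < (f j : nat))%N] && (\sum_j (f j : nat) == n)%N.

Definition PosMon (h n : nat) := {f : {ffun 'I_h -> 'I_n.+1} | @posmon_pred h n f}.

Definition mexp h n (m : PosMon h n) (j : 'I_h) : nat := (val m j : nat).

(* The degree-n part (P^{(x)h}_n)^{>0}: F_2-vector space with basis the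
   monomials of PosMon h n. *)
Definition Vsp (h n : nat) := {ffun PosMon h n -> ('F_2)^o}.

Definition monv h n (m : PosMon h n) : Vsp h n := [ffun b => (b == m)%:R].

Definition alpha (k a : nat) : nat := odd (a %/ 2 ^ k).

(* weight vector: weight a k = omega_{k+1}(t) = sum_j alpha_k(a_j). *)
Definition weight h (a : 'I_h -> nat) (k : nat) : nat := (\sum_j alpha k (a j))%N.

Definition wvec (s : seq nat) (k : nat) : nat := nth 0%N s k.

(* Left-lexicographic order on sequences nat -> nat, comparing the entries
   of index < N (all entries of index >= N vanish in our uses). *)
Definition lex_lt (N : nat) (w1 w2 : nat -> nat) : bool :=
  [exists i : 'I_N, (w1 i < w2 i)%N && [forall j : 'I_N, (j < i)%N ==> (w1 j == w2 j)]].
Definition lex_le (N : nat) (w1 w2 : nat -> nat) : bool :=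
  lex_lt N w1 w2 || [forall i : 'I_N, w1 i == w2 i].

(* Bound: for a degree-n monomial, alpha_k(a_j) = 0 when k >= n. *)
Definition wbound (n : nat) (s : seq nat) : nat := maxn (size s) n.

Definition Ple h n (s : seq nat) : {vspace Vsp h n} :=
  (\sum_(m : PosMon h n | lex_le (wbound n s) (weight (mexp m)) (wvec s)) <[monv m]>)%VS.
Definition Plt h n (s : seq nat) : {vspace Vsp h n} :=
  (\sum_(m : PosMon h n | lex_lt (wbound n s) (weight (mexp m)) (wvec s)) <[monv m]>)%VS.

(* Standard action of the Steenrod squares (Cartan formula):
   Sq^k(t_1^{a_1}...t_h^{a_h}) = sum over b with b_j >= a_j, sum b = sum a + k
   of prod_j binom(a_j, b_j - a_j) t^b  (mod 2).
   sqv n a is Sq^k(t^a) for k = n - deg(t^a), as an element of degree n. *)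
Definition sq_coef h (a b : 'I_h -> nat) : nat :=
  if [forall j, (a j <= b j)%N] then (\prod_j 'C(a j, b j - a j))%N else 0%N.

Definition sqv h n (a : 'I_h -> nat) : Vsp h n :=
  [ffun b => (sq_coef a (mexp b))%:R].

Definition Hit h n : {vspace Vsp h n} :=
  (\sum_(k < n.+1 | (0 < k)%N) \sum_(m : PosMon h (n - k)) <[sqv n (mexp m)]>)%VS.

Definition dimQP h n (s : seq nat) : nat :=
  (\dim (Ple h n s) - \dim ((Hit h n :&: Ple h n s) + Plt h n s)%VS)%N.

Definition omega1 : seq nat := [:: 2; 2; 1]%N.
Definition omega2 : seq nat := [:: 2; 4]%N.
Definition omega3 : seq nat := [:: 4; 1; 1]%N.
Definition omega4 : seq nat := [:: 4; 3]%N.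
Definition omega5 : seq nat := [:: 6; 2]%N.
Definition omegas : seq (seq nat) := [:: omega1; omega2; omega3; omega4; omega5].

From HB Require Import structures.
From mathcomp Require Import all_boot all_order all_algebra zify.
Set Implicit Arguments. Unset Strict Implicit. Unset Printing Implicit Defensive.
Import GRing.Theory.

(* The space (P_n)^{>0}(w) is spanned by the monomials of weight <= w, so its
   dimension is at most their number N; let K be the subspace we divide by.
   Monomials q_1, ..., q_c of weight <= w with dual linear functionals that
   vanish on K show dim K + c <= dim (P_n)^{>0}(w); elements y_1, ..., y_d of K
   with dual coordinate functionals show d <= dim K.  Once c + d = N, all these
   inequalities are equalities and the quotient has dimension c.  Such families
   were found by computer and are checked here by evaluation.  For h >= 9 there
   is nothing to compute: a monomial of degree 10 in h variables with positive
   exponents has w_1 >= 2h - 10 >= 8, more than the first entry of any w^(j). *)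

Fixpoint compositions (h n : nat) : seq (seq nat) :=
  if h is h'.+1 then [seq x :: c | x <- iota 1 n, c <- compositions h' (n - x)]
  else if n is 0 then [:: [::]] else [::].

Definition is_composition (h n : nat) (l : seq nat) : bool :=
  [&& size l == h, all (fun x => 0 < x) l & sumn l == n].

Lemma mem_compositions h n l : (l \in compositions h n) = is_composition h n l.
Proof.
elim: h n l => [|h IH] n l.
  by case: n l => [|n] [|x l]; rewrite ?inE //= /is_composition /= andbF.
apply/allpairsPdep/idP => [[x [c [x_in c_in ->]]] | ].
  move: x_in c_in; rewrite mem_iota add1n ltnS IH => /andP[x_gt0 x_le].
  case/and3P=> /eqP sz pos /eqP sum_c.
  by rewrite /is_composition /= sz x_gt0 pos sum_c subnKC ?eqxx.
case: l => [|x c]; first by case/and3P.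
rewrite /is_composition /= eqSS => /and3P[sz /andP[x_gt0 pos] /eqP sum_xc].
exists x, c; split=> //; last by rewrite IH /is_composition sz pos -sum_xc addKn eqxx.
by rewrite mem_iota x_gt0 add1n ltnS -sum_xc leq_addr.
Qed.

Lemma compositions_uniq h n : uniq (compositions h n).
Proof.
elim: h n => [|h IH] n; first by case: n.
apply: allpairs_uniq_dep => [|x _|]; first exact: iota_uniq; first exact: IH.
by move=> [x c] [y d] _ _ /= [-> ->].
Qed.

Definition mon_seq (h n : nat) (m : PosMon h n) : seq nat :=
  [seq mexp m j | j <- enum 'I_h].

Lemma nth_mon_seq h n (m : PosMon h n) (j : 'I_h) : nth 0 (mon_seq m) j = mexp m j.
Proof. by rewrite (nth_map j) ?size_enum_ord // nth_ord_enum. Qed.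

Lemma sumn_enum_ord h (F : 'I_h -> nat) : sumn [seq F j | j <- enum 'I_h] = \sum_j F j.
Proof. by rewrite sumnE big_map big_enum. Qed.

Lemma mon_seq_composition h n (m : PosMon h n) : is_composition h n (mon_seq m).
Proof.
have /andP[/forallP pos /eqP sum_m] := valP m.
rewrite /is_composition size_map size_enum_ord eqxx /mon_seq sumn_enum_ord.
by rewrite sum_m eqxx andbT; apply/allP => _ /mapP[j _ ->]; apply: pos.
Qed.

Lemma mon_seq_inj h n : injective (@mon_seq h n).
Proof.
move=> m1 m2 eq_m; apply/val_inj/ffunP => j; apply: val_inj.
by have := nth_mon_seq m1 j; rewrite eq_m nth_mon_seq.
Qed.

Lemma mon_seq_onto h n l : is_composition h n l -> exists m : PosMon h n, mon_seq m = l.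
Proof.
case/and3P => /eqP size_l /allP pos /eqP sum_l.
have nth_le j : nth 0 l j <= n.
  rewrite -sum_l; elim: l {size_l pos sum_l} j => [|x l IHl] [|j] //=.
    exact: leq_addr.
  exact: leq_trans (IHl j) (leq_addl x _).
pose f := [ffun j : 'I_h => (inord (nth 0 l j) : 'I_n.+1)].
have fE j : (f j : nat) = nth 0 l j by rewrite ffunE inordK // ltnS.
have f_seq : [seq (f j : nat) | j <- enum 'I_h] = l.
  apply: (@eq_from_nth _ 0); rewrite size_map size_enum_ord // => i lt_ih.
  by rewrite (nth_map (Ordinal lt_ih)) ?size_enum_ord // fE nth_enum_ord.
suff Pf : posmon_pred f by exists (exist _ f Pf).
apply/andP; split; first by apply/forallP => j; rewrite fE pos ?mem_nth ?size_l.
by rewrite -sumn_enum_ord f_seq sum_l.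
Qed.

Lemma big_mon_seq (R : Type) (idx : R) (op : Monoid.com_law idx) h n
    (S : seq (seq nat)) (F : seq nat -> R) :
  uniq S -> all (is_composition h n) S ->
  \big[op/idx]_(m : PosMon h n | mon_seq m \in S) F (mon_seq m) = \big[op/idx]_(l <- S) F l.
Proof.
move=> uniq_S comp_S.
rewrite -(big_map (@mon_seq h n) (mem S) F) -big_filter; apply/perm_big/uniq_perm => //.
  by rewrite filter_uniq // map_inj_uniq ?index_enum_uniq //; apply: mon_seq_inj.
move=> l; rewrite mem_filter andb_idr // => l_S.
by have [m <-] := mon_seq_onto (allP comp_S l l_S); rewrite map_f ?mem_index_enum.
Qed.

Fixpoint sq_coef_seq (a b : seq nat) : nat :=
  match a, b with
  | [::], [::] => 1
  | x :: a', y :: b' => if x <= y then 'C(x, y - x) * sq_coef_seq a' b' else 0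
  | _, _ => 0
  end.

Lemma sq_coefE h (a b : 'I_h -> nat) :
  sq_coef a b = sq_coef_seq [seq a j | j <- enum 'I_h] [seq b j | j <- enum 'I_h].
Proof.
rewrite /sq_coef -big_enum.
have -> : [forall j, a j <= b j] = all (fun j => a j <= b j) (enum 'I_h).
  by apply/forallP/allP => le_ab j //; rewrite le_ab ?mem_enum.
elim: (enum 'I_h) => [|j r IHr]; rewrite ?big_nil // big_cons /=.
by case: (a j <= b j) => //=; rewrite -IHr; case: all; rewrite ?muln0.
Qed.

Definition weight_seq (l : seq nat) (k : nat) : nat := sumn [seq alpha k x | x <- l].

Lemma weight_mon_seq h n (m : PosMon h n) : weight (mexp m) =1 weight_seq (mon_seq m).
Proof. by move=> k; rewrite /weight_seq -map_comp sumn_enum_ord. Qed.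

Lemma eq_lex_lt N w1 w1' w2 : w1 =1 w1' -> lex_lt N w1 w2 = lex_lt N w1' w2.
Proof.
move=> eq_w; apply: eq_existsb => i; rewrite eq_w; congr (_ && _).
by apply: eq_forallb => j; rewrite eq_w.
Qed.

Lemma eq_lex_le N w1 w1' w2 : w1 =1 w1' -> lex_le N w1 w2 = lex_le N w1' w2.
Proof.
move=> eq_w; rewrite /lex_le (eq_lex_lt _ _ eq_w); congr (_ || _).
by apply: eq_forallb => i; rewrite eq_w.
Qed.

(* Quantifiers over 'I_N do not evaluate in reasonable time under vm_compute,
   hence these list-based versions of lex_lt and lex_le. *)
Definition lexb_lt (N : nat) (w1 w2 : nat -> nat) : bool :=
  has (fun i => (w1 i < w2 i) && all (fun j => w1 j == w2 j) (iota 0 i)) (iota 0 N).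
Definition lexb_le (N : nat) (w1 w2 : nat -> nat) : bool :=
  lexb_lt N w1 w2 || all (fun i => w1 i == w2 i) (iota 0 N).

Lemma lex_ltE N w1 w2 : lex_lt N w1 w2 = lexb_lt N w1 w2.
Proof.
apply/existsP/hasP => [[i /andP[lt_i /forallP eq_lt_i]] | [i]].
  exists (nat_of_ord i); first by rewrite mem_iota ltn_ord.
  rewrite lt_i; apply/allP => j; rewrite mem_iota /= => lt_ji.
  exact: implyP (eq_lt_i (Ordinal (ltn_trans lt_ji (ltn_ord i)))) lt_ji.
rewrite mem_iota /= => lt_iN /andP[lt_i /allP eq_lt_i].
exists (Ordinal lt_iN); rewrite lt_i; apply/forallP => j; apply/implyP => lt_ji.
by rewrite eq_lt_i // mem_iota.
Qed.

Lemma lex_leE N w1 w2 : lex_le N w1 w2 = lexb_le N w1 w2.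
Proof.
rewrite /lex_le lex_ltE; congr (_ || _).
apply/forallP/allP => [eq_w i | eq_w i]; last by rewrite eq_w // mem_iota /= ltn_ord.
by rewrite mem_iota => /= lt_iN; exact: (eq_w (Ordinal lt_iN)).
Qed.

Definition weight_le (n : nat) (s l : seq nat) : bool :=
  lexb_le (wbound n s) (weight_seq l) (wvec s).
Definition weight_lt (n : nat) (s l : seq nat) : bool :=
  lexb_lt (wbound n s) (weight_seq l) (wvec s).

Lemma weight_leE h n s (m : PosMon h n) :
  lex_le (wbound n s) (weight (mexp m)) (wvec s) = weight_le n s (mon_seq m).
Proof. by rewrite (eq_lex_le _ _ (weight_mon_seq m)) lex_leE. Qed.

Lemma weight_ltE h n s (m : PosMon h n) :
  lex_lt (wbound n s) (weight (mexp m)) (wvec s) = weight_lt n s (mon_seq m).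
Proof. by rewrite (eq_lex_lt _ _ (weight_mon_seq m)) lex_ltE. Qed.

Lemma lex_leF_head N w1 w2 : 0 < N -> w2 0 < w1 0 -> lex_le N w1 w2 = false.
Proof.
move=> N_gt0 lt_w0; have ne_w0 : w1 0 == w2 0 = false by rewrite gtn_eqF.
apply/negbTE; rewrite negb_or; apply/andP; split; last first.
  by apply/forallP => /(_ (Ordinal N_gt0)); rewrite ne_w0.
apply/existsP => -[[[|i] lt_i] /= /andP[lt_wi /forallP eq_lt]].
  by rewrite ltnNge ltnW in lt_wi.
by have := eq_lt (Ordinal N_gt0); rewrite /= ne_w0.
Qed.

Lemma weight0_ge h n (m : PosMon h n) : 2 * h <= weight (mexp m) 0 + n.
Proof.
have /andP[/forallP pos /eqP sum_m] := valP m.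
rewrite -[X in _ <= _ + X]sum_m /weight -big_split /= mulnC.
rewrite -[X in X * 2 <= _]card_ord -sum_nat_const leq_sum // => j _.
rewrite /alpha expn0 divn1; move: (pos j); rewrite -/(mexp m j).
by case: (mexp m j) => [|[|a]] //= _; rewrite addnC.
Qed.

Local Open Scope ring_scope.

Section DualFamily.
Variables (K : fieldType) (V : vectType K) (f : nat -> {scalar V}) (Y : seq V).
Hypothesis dual_fY : forall i j, (i < size Y)%N -> (j < size Y)%N -> f i Y`_j = (i == j)%:R.

Lemma dual_coord (c : 'I_(size Y) -> K) (i : 'I_(size Y)) :
  f i (\sum_j c j *: Y`_j) = c i.
Proof.
rewrite linear_sum (bigD1 i) //= big1 => [|j ne_ji]; rewrite scalarZ dual_fY //.
  by rewrite eqxx mulr1 addr0.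
by rewrite eq_sym (negbTE (ne_ji : j != i :> nat)) mulr0.
Qed.

Lemma dual_free : free Y.
Proof.
apply/(@freeP _ _ _ (in_tuple Y)) => c sum_c0 i.
by rewrite -(dual_coord c) sum_c0 linear0.
Qed.

Lemma dimv_add_dual (U W : {vspace V}) :
  (U <= W)%VS -> {subset Y <= W} ->
  (forall i, (i < size Y)%N -> {in U, forall u, f i u = 0}) ->
  (\dim U + size Y <= \dim W)%N.
Proof.
move=> sUW sYW fU0.
have capUY : (U :&: <<Y>> = 0)%VS.
  apply/eqP; rewrite -subv0; apply/subvP => v /memv_capP[vU vY].
  have {}vY := coord_span (X := in_tuple Y) vY.
  rewrite memv0 vY big1 // => i _.
  have := dual_coord (coord (in_tuple Y) ^~ v) i.
  by rewrite -vY fU0 // => <-; rewrite scale0r.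
rewrite -(eqP dual_free) -dimv_disjoint_sum //.
by apply: dimvS; rewrite subv_add sUW; apply/span_subvP.
Qed.

Lemma dual_size_le_dimv (U : {vspace V}) : {subset Y <= U} -> (size Y <= \dim U)%N.
Proof.
move=> sYU; have := @dimv_add_dual 0 U (sub0v U) sYU.
by rewrite dimv0; apply=> i _ u; rewrite memv0 => /eqP ->; rewrite linear0.
Qed.

End DualFamily.

Definition dual_seq (T : Type) (x0 : T) (e : T -> T -> bool) (c : seq T) : bool :=
  all (fun i => all (fun j => e (nth x0 c i) (nth x0 c j) == (i == j)) (iota 0 (size c)))
      (iota 0 (size c)).

Lemma dual_seqP (T : Type) (x0 : T) e (c : seq T) : dual_seq x0 e c ->
  forall i j, (i < size c)%N -> (j < size c)%N -> e (nth x0 c i) (nth x0 c j) = (i == j).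
Proof. by move=> /allP dual_c i j lt_i lt_j; apply/eqP/(allP (dual_c i _)); rewrite mem_iota. Qed.

Lemma natr_F2 k : k%:R = (odd k)%:R :> 'F_2.
Proof. by rewrite -(@Fp_nat_mod 2) ?modn2. Qed.

Definition coefv (h n : nat) (G : seq nat -> nat) : Vsp h n :=
  [ffun m => (G (mon_seq m))%:R].

Definition seq_monv (h n : nat) (q : seq nat) : Vsp h n := coefv h n (fun l => q == l).

Definition coef_sum (h n : nat) (S : seq (seq nat)) (v : Vsp h n) : 'F_2 :=
  \sum_(m : PosMon h n | mon_seq m \in S) v m.

Lemma coef_sum_is_scalar h n S : scalar (@coef_sum h n S).
Proof.
move=> a u v; rewrite /coef_sum mulr_sumr -big_split.
by apply: eq_bigr => m _; rewrite !ffunE.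
Qed.

HB.instance Definition _ h n S :=
  GRing.isLinear.Build 'F_2 (Vsp h n) 'F_2 *%R (@coef_sum h n S) (coef_sum_is_scalar S).

Lemma eq_coefv h n (G1 G2 : seq nat -> nat) : G1 =1 G2 -> coefv h n G1 = coefv h n G2.
Proof. by move=> eq_G; apply/ffunP => m; rewrite !ffunE eq_G. Qed.

Lemma coefvD h n (G1 G2 : seq nat -> nat) :
  coefv h n (fun l => G1 l + G2 l)%N = coefv h n G1 + coefv h n G2.
Proof. by apply/ffunP => m; rewrite !ffunE natrD. Qed.

Lemma coefv_sumn h n (T : Type) (r : seq T) (G : T -> seq nat -> nat) :
  coefv h n (fun l => sumn [seq G x l | x <- r]) = \sum_(x <- r) coefv h n (G x).
Proof.
apply/ffunP => m; rewrite sum_ffunE ffunE sumnE big_map natr_sum.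
by apply: eq_bigr => x _; rewrite ffunE.
Qed.

Lemma monv_seq_monv h n (m : PosMon h n) : monv m = seq_monv h n (mon_seq m).
Proof. by apply/ffunP => b; rewrite !ffunE (inj_eq (@mon_seq_inj h n)) eq_sym. Qed.

Lemma sqv_coefv h n d (a : PosMon h d) : sqv n (mexp a) = coefv h n (sq_coef_seq (mon_seq a)).
Proof. by apply/ffunP => b; rewrite !ffunE sq_coefE. Qed.

Lemma monv_decomp h n (v : Vsp h n) : v = \sum_m v m *: monv m.
Proof.
apply/ffunP => b; rewrite sum_ffunE (bigD1 b) //= big1 => [|m ne_mb].
  by rewrite !ffunE eqxx addr0; exact/esym/mulr1.
by rewrite !ffunE eq_sym (negbTE ne_mb); exact: mulr0.
Qed.

Lemma coef_sum_coefv h n S G : uniq S -> all (is_composition h n) S ->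
  coef_sum S (coefv h n G) = (\sum_(l <- S) G l)%:R.
Proof.
move=> uniq_S comp_S; rewrite natr_sum -(big_mon_seq _ (fun l => (G l)%:R) uniq_S comp_S).
by apply: eq_bigr => m _; rewrite ffunE.
Qed.

Lemma coef_sum_seq_monv h n S q : uniq S -> all (is_composition h n) S ->
  coef_sum S (seq_monv h n q) = (q \in S)%:R.
Proof.
move=> uniq_S comp_S; rewrite coef_sum_coefv // -count_uniq_mem //; congr (_%:R).
by elim: S {uniq_S comp_S} => [|l S IHS]; rewrite ?big_nil // big_cons IHS eq_sym.
Qed.

Lemma coef_sum_monv h n S (m : PosMon h n) : coef_sum S (monv m) = (mon_seq m \in S)%:R.
Proof.
rewrite /coef_sum; have [m_S | m_notS] := boolP (mon_seq m \in S).
  rewrite (bigD1 m) //= big1 => [|b /andP[_ ne_bm]]; rewrite ffunE ?eqxx ?addr0 //.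
  by rewrite (negbTE ne_bm).
by rewrite big1 // => b b_S; rewrite ffunE; case: eqP => // eq_bm; rewrite -eq_bm b_S in m_notS.
Qed.

Lemma coefv_Ple h n s G :
  {in compositions h n, forall l, odd (G l) -> weight_le n s l} -> coefv h n G \in Ple h n s.
Proof.
move=> G_le; rewrite [coefv _ _ _]monv_decomp; apply: memv_suml => m _.
have [le_m | nle_m] := boolP (lex_le (wbound n s) (weight (mexp m)) (wvec s)).
  by apply/memvZ; rewrite /Ple (bigD1 m) //=; apply/(subvP (addvSl _ _))/memv_line.
rewrite ffunE natr_F2; case: (boolP (odd _)) => [odd_G | _]; last by rewrite scale0r mem0v.
by rewrite weight_leE G_le ?mem_compositions ?mon_seq_composition in nle_m.
Qed.

Lemma seq_monv_Ple h n s q : weight_le n s q -> seq_monv h n q \in Ple h n s.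
Proof. by move=> le_q; apply: coefv_Ple => l _; case: eqP => // <-. Qed.

Lemma seq_monv_Plt h n s q :
  is_composition h n q -> weight_lt n s q -> seq_monv h n q \in Plt h n s.
Proof.
case/mon_seq_onto => m <- lt_m; rewrite -monv_seq_monv /Plt (bigD1 m) ?weight_ltE //=.
exact/(subvP (addvSl _ _))/memv_line.
Qed.

Lemma Plt_sub_Ple h n s : (Plt h n s <= Ple h n s)%VS.
Proof. by apply/subv_sumP => m lt_m; apply: (sumv_sup m) => //; rewrite /lex_le lt_m. Qed.

Lemma sq_coef_Hit h n a : is_composition h (sumn a) a -> (sumn a < n)%N ->
  coefv h n (sq_coef_seq a) \in Hit h n.
Proof.
move=> comp_a lt_an; have lt_k : (n - sumn a < n.+1)%N by rewrite ltnS leq_subr.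
have [a' <-] : exists a' : PosMon h (n - Ordinal lt_k), mon_seq a' = a.
  by apply: mon_seq_onto; rewrite subKn // ltnW.
rewrite /Hit (bigD1 (Ordinal lt_k)) ?subn_gt0 // -sqv_coefv.
apply: (subvP (addvSl _ _)); rewrite (bigD1 a') //=.
exact/(subvP (addvSl _ _))/memv_line.
Qed.

Lemma dimv_Ple h n s : (\dim (Ple h n s) <= count (weight_le n s) (compositions h n))%N.
Proof.
rewrite -size_filter -sum1_size /Ple; apply: (leq_trans (dimv_leq_sum _ _ _)).
rewrite -(@big_mon_seq _ _ _ h n _ (fun=> 1%N)) ?filter_uniq ?compositions_uniq //; last first.
  by apply/allP => l; rewrite mem_filter mem_compositions => /andP[].
rewrite big_mkcond [leqRHS]big_mkcond leq_sum // => m _.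
rewrite mem_filter mem_compositions mon_seq_composition andbT -weight_leE.
by case: ifP; rewrite ?dim_vline ?leq_b1.
Qed.

Lemma dimQP_small_weight0 h n s : (0 < n)%N -> (wvec s 0 + n < 2 * h)%N -> dimQP h n s = 0%N.
Proof.
move=> n_gt0 lt_w0; rewrite /dimQP /Ple big_pred0 ?dimv0 // => m.
apply: lex_leF_head; first by rewrite leq_max n_gt0 orbT.
by have := weight0_ge m; lia.
Qed.

Definition QPker (h n : nat) (s : seq nat) : {vspace Vsp h n} :=
  ((Hit h n :&: Ple h n s) + Plt h n s)%VS.

Lemma coef_sum_Plt h n s S : all (fun l => ~~ weight_lt n s l) S ->
  {in Plt h n s, forall v, coef_sum S v = 0}.
Proof.
move=> nlt_S _ /memv_sumP[vs vs_line ->]; rewrite linear_sum big1 // => m lt_m.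
have /vlineP[k ->] := vs_line m lt_m; rewrite scalarZ /= coef_sum_monv.
have m_notS : mon_seq m \notin S by apply: contraL lt_m => /(allP nlt_S); rewrite weight_ltE.
by rewrite (negbTE m_notS) mulr0.
Qed.

Definition kills_hit (h n : nat) (S : seq (seq nat)) : bool :=
  all (fun k => all (fun a => ~~ odd (sumn [seq sq_coef_seq a l | l <- S]))
                    (compositions h (n - k)))
      (iota 1 n).

Lemma coef_sum_Hit h n S : uniq S -> all (is_composition h n) S -> kills_hit h n S ->
  {in Hit h n, forall v, coef_sum S v = 0}.
Proof.
move=> uniq_S comp_S kills_S _ /memv_sumP[vs vs_Sq ->]; rewrite linear_sum big1 // => k k_gt0.
have /memv_sumP[ws ws_line ->] := vs_Sq k k_gt0; rewrite linear_sum big1 // => a _.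
have /vlineP[c ->] := ws_line a isT; rewrite scalarZ /= sqv_coefv coef_sum_coefv // natr_F2.
have k_in : (k : nat) \in iota 1 n by rewrite mem_iota k_gt0 add1n ltn_ord.
have a_in : mon_seq a \in compositions h (n - k) by rewrite mem_compositions mon_seq_composition.
have := allP (allP kills_S _ k_in) _ a_in.
by rewrite sumnE big_map => /negbTE ->; rewrite mulr0.
Qed.

Definition kills_QPker (h n : nat) (s : seq nat) (S : seq (seq nat)) : bool :=
  [&& uniq S, all (is_composition h n) S, all (fun l => ~~ weight_lt n s l) S & kills_hit h n S].

Lemma coef_sum_QPker h n s S : kills_QPker h n s S -> {in QPker h n s, forall v, coef_sum S v = 0}.
Proof.
case/and4P=> uniq_S comp_S nlt_S kills_S _ /memv_addP[u /memv_capP[u_Hit _] [w w_Plt ->]].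
by rewrite raddfD /= coef_sum_Hit // (coef_sum_Plt nlt_S) // addr0.
Qed.

(** * Dimension certificates *)

(* An entry (S, q) of a quot_cert stands for the monomial with exponents q and
   the functional summing the coefficients of the monomials listed in S.
   An entry (A, B, p) of a sub_cert stands for the element
   sum_(a in A) Sq(t^a) + sum_(b in B) t^b of QPker, paired with the
   coefficient of t^p. *)
Notation quot_cert := (seq (seq (seq nat) * seq nat)).
Notation sub_cert := (seq (seq (seq nat) * seq (seq nat) * seq nat)).

Definition quot_cert_ok (h n : nat) (s : seq nat) (C : quot_cert) : bool :=
  all (fun c => [&& kills_QPker h n s c.1, is_composition h n c.2 & weight_le n s c.2]) C
  && dual_seq ([::], [::]) (fun c c' => c'.2 \in c.1) C.

Lemma quot_cert_dim h n s C : quot_cert_ok h n s C ->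
  (\dim (QPker h n s) + size C <= \dim (Ple h n s))%N.
Proof.
case/andP=> /allP C_ok dual_C; have C_dual := dual_seqP dual_C.
set x0 := ([::], [::]) in C_dual.
have nth_ok i (lt_i : (i < size C)%N) := C_ok _ (mem_nth x0 lt_i).
rewrite -(size_map (fun c => seq_monv h n c.2)).
apply: (@dimv_add_dual _ _ (fun i => coef_sum (nth x0 C i).1)).
- move=> i j; rewrite !size_map => lt_i lt_j; rewrite (nth_map x0) // -C_dual //.
  have /and3P[/and4P[uniq_L comp_L _ _] _ _] := nth_ok i lt_i.
  by rewrite /= coef_sum_seq_monv.
- by rewrite subv_add capvSr Plt_sub_Ple.
- by move=> _ /mapP[c /C_ok /and3P[_ _ le_q] ->]; apply: seq_monv_Ple.
- move=> i; rewrite size_map => lt_i; apply: coef_sum_QPker.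
  by have /and3P[] := nth_ok i lt_i.
Qed.

Definition sub_coef (x : seq (seq nat) * seq (seq nat)) (l : seq nat) : nat :=
  sumn [seq sq_coef_seq a l | a <- x.1] + count_mem l x.2.

Definition sub_cert_ok (h n : nat) (s : seq nat) (D : sub_cert) : bool :=
  all (fun d => let: (A, B, p) := d in
         [&& all (fun a => is_composition h (sumn a) a && (sumn a < n)%N) A,
             all (fun b => is_composition h n b && weight_lt n s b) B,
             all (fun l => odd (sumn [seq sq_coef_seq a l | a <- A]) ==> weight_le n s l)
                 (compositions h n)
           & is_composition h n p]) D
  && dual_seq ([::], [::], [::]) (fun d d' => odd (sub_coef d'.1 d.2)) D.

Lemma sub_coef_QPker h n s A B :
  all (fun a => is_composition h (sumn a) a && (sumn a < n)%N) A ->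
  all (fun b => is_composition h n b && weight_lt n s b) B ->
  all (fun l => odd (sumn [seq sq_coef_seq a l | a <- A]) ==> weight_le n s l) (compositions h n) ->
  coefv h n (sub_coef (A, B)) \in QPker h n s.
Proof.
move=> /allP A_ok /allP B_ok /allP hit_le; rewrite coefvD; apply: memv_add.
  rewrite memv_cap coefv_Ple ?andbT => [|l /hit_le/implyP //].
  rewrite coefv_sumn big_seq; apply: memv_suml => a /A_ok /andP[comp_a lt_a].
  exact: sq_coef_Hit.
rewrite (@eq_coefv h n _ (fun l => sumn [seq (b == l) : nat | b <- B])) => [|l]; last first.
  by rewrite sumn_count.
rewrite coefv_sumn big_seq; apply: memv_suml => b /B_ok /andP[comp_b lt_b].
exact: seq_monv_Plt.
Qed.

Lemma sub_cert_dim h n s D : sub_cert_ok h n s D -> (size D <= \dim (QPker h n s))%N.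
Proof.
case/andP=> /allP D_ok dual_D; have D_dual := dual_seqP dual_D.
set x0 := ([::], [::], [::]) in D_dual.
rewrite -(size_map (fun d => coefv h n (sub_coef d.1))).
apply: (@dual_size_le_dimv _ _ (fun i => coef_sum [:: (nth x0 D i).2])).
- move=> i j; rewrite !size_map => lt_i lt_j; rewrite (nth_map x0) // -D_dual //.
  case: (nth x0 D i) (D_ok _ (mem_nth x0 lt_i)) => [[A B] p] /and4P[_ _ _ comp_p].
  by rewrite /= coef_sum_coefv //= ?comp_p // big_seq1 natr_F2.
- by move=> _ /mapP[[[A B] p] /D_ok /and4P[A_ok B_ok hit_le _] ->]; apply: sub_coef_QPker.
Qed.

Definition cert_ok (h n : nat) (s : seq nat) (C : quot_cert) (D : sub_cert) : bool :=
  [&& quot_cert_ok h n s C, sub_cert_ok h n s D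
    & size D + size C == count (weight_le n s) (compositions h n)]%N.

Theorem dimQP_cert h n s C D : cert_ok h n s C D -> dimQP h n s = size C.
Proof.
case/and3P=> /quot_cert_dim le_C /sub_cert_dim le_D /eqP size_DC.
have le_Ple := dimv_Ple h n s; rewrite /dimQP -/(QPker h n s); lia.
Qed.

Lemma map_dimQP_cert h n ws (certs : seq (quot_cert * sub_cert)) :
  all2 (fun s c => cert_ok h n s c.1 c.2) ws certs ->
  map (dimQP h n) ws = [seq size c.1 | c <- certs].
Proof.
by elim: ws certs => [|s ws IHws] [|c certs] //= /andP[/dimQP_cert -> /IHws ->].
Qed.

Local Close Scope ring_scope.

Definition qcert_7_4 : quot_cert :=
  [:: ([:: [:: 1; 1; 1; 1; 1; 1; 4]; [:: 1; 1; 1; 1; 1; 4; 1]; [:: 1; 1; 1; 1; 2; 2; 2];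
      [:: 1; 1; 1; 1; 4; 1; 1]; [:: 2; 1; 1; 1; 1; 1; 3]; [:: 2; 1; 1; 1; 1; 2; 2];
      [:: 2; 1; 1; 1; 1; 3; 1]; [:: 2; 1; 1; 1; 2; 1; 2]; [:: 2; 1; 1; 1; 2; 2; 1];
      [:: 2; 1; 1; 1; 3; 1; 1]; [:: 3; 2; 1; 1; 1; 1; 1];
      [:: 4; 1; 1; 1; 1; 1; 1]], [:: 1; 1; 1; 1; 2; 2; 2]);
  ([:: [:: 1; 1; 1; 1; 1; 1; 4]; [:: 1; 1; 1; 1; 1; 4; 1]; [:: 1; 1; 1; 2; 1; 2; 2];
      [:: 1; 1; 1; 4; 1; 1; 1]; [:: 2; 1; 1; 1; 1; 1; 3]; [:: 2; 1; 1; 1; 1; 2; 2];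
      [:: 2; 1; 1; 1; 1; 3; 1]; [:: 2; 1; 1; 2; 1; 1; 2]; [:: 2; 1; 1; 2; 1; 2; 1];
      [:: 2; 1; 1; 3; 1; 1; 1]; [:: 3; 2; 1; 1; 1; 1; 1];
      [:: 4; 1; 1; 1; 1; 1; 1]], [:: 1; 1; 1; 2; 1; 2; 2]);
  ([:: [:: 1; 1; 1; 1; 1; 1; 4]; [:: 1; 1; 1; 1; 4; 1; 1]; [:: 1; 1; 1; 2; 2; 1; 2];
      [:: 1; 1; 1; 4; 1; 1; 1]; [:: 2; 1; 1; 1; 1; 1; 3]; [:: 2; 1; 1; 1; 2; 1; 2];
      [:: 2; 1; 1; 1; 3; 1; 1]; [:: 2; 1; 1; 2; 1; 1; 2]; [:: 2; 1; 1; 2; 2; 1; 1];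
      [:: 2; 1; 1; 3; 1; 1; 1]; [:: 3; 2; 1; 1; 1; 1; 1];
      [:: 4; 1; 1; 1; 1; 1; 1]], [:: 1; 1; 1; 2; 2; 1; 2]);
  ([:: [:: 1; 1; 1; 1; 1; 4; 1]; [:: 1; 1; 1; 1; 4; 1; 1]; [:: 1; 1; 1; 2; 2; 2; 1];
      [:: 1; 1; 1; 4; 1; 1; 1]; [:: 2; 1; 1; 1; 1; 3; 1]; [:: 2; 1; 1; 1; 2; 2; 1];
      [:: 2; 1; 1; 1; 3; 1; 1]; [:: 2; 1; 1; 2; 1; 2; 1]; [:: 2; 1; 1; 2; 2; 1; 1];
      [:: 2; 1; 1; 3; 1; 1; 1]; [:: 3; 2; 1; 1; 1; 1; 1];
      [:: 4; 1; 1; 1; 1; 1; 1]], [:: 1; 1; 1; 2; 2; 2; 1]);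
  ([:: [:: 1; 1; 1; 1; 1; 1; 4]; [:: 1; 1; 1; 1; 1; 4; 1]; [:: 1; 1; 2; 1; 1; 2; 2];
      [:: 1; 1; 4; 1; 1; 1; 1]; [:: 2; 1; 1; 1; 1; 1; 3]; [:: 2; 1; 1; 1; 1; 2; 2];
      [:: 2; 1; 1; 1; 1; 3; 1]; [:: 2; 1; 2; 1; 1; 1; 2]; [:: 2; 1; 2; 1; 1; 2; 1];
      [:: 2; 1; 3; 1; 1; 1; 1]; [:: 3; 2; 1; 1; 1; 1; 1];
      [:: 4; 1; 1; 1; 1; 1; 1]], [:: 1; 1; 2; 1; 1; 2; 2]);
  ([:: [:: 1; 1; 1; 1; 1; 1; 4]; [:: 1; 1; 1; 1; 4; 1; 1]; [:: 1; 1; 2; 1; 2; 1; 2];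
      [:: 1; 1; 4; 1; 1; 1; 1]; [:: 2; 1; 1; 1; 1; 1; 3]; [:: 2; 1; 1; 1; 2; 1; 2];
      [:: 2; 1; 1; 1; 3; 1; 1]; [:: 2; 1; 2; 1; 1; 1; 2]; [:: 2; 1; 2; 1; 2; 1; 1];
      [:: 2; 1; 3; 1; 1; 1; 1]; [:: 3; 2; 1; 1; 1; 1; 1];
      [:: 4; 1; 1; 1; 1; 1; 1]], [:: 1; 1; 2; 1; 2; 1; 2]);
  ([:: [:: 1; 1; 1; 1; 1; 4; 1]; [:: 1; 1; 1; 1; 4; 1; 1]; [:: 1; 1; 2; 1; 2; 2; 1];
      [:: 1; 1; 4; 1; 1; 1; 1]; [:: 2; 1; 1; 1; 1; 3; 1]; [:: 2; 1; 1; 1; 2; 2; 1];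
      [:: 2; 1; 1; 1; 3; 1; 1]; [:: 2; 1; 2; 1; 1; 2; 1]; [:: 2; 1; 2; 1; 2; 1; 1];
      [:: 2; 1; 3; 1; 1; 1; 1]; [:: 3; 2; 1; 1; 1; 1; 1];
      [:: 4; 1; 1; 1; 1; 1; 1]], [:: 1; 1; 2; 1; 2; 2; 1]);
  ([:: [:: 1; 1; 1; 1; 1; 1; 4]; [:: 1; 1; 1; 4; 1; 1; 1]; [:: 1; 1; 2; 2; 1; 1; 2];
      [:: 1; 1; 4; 1; 1; 1; 1]; [:: 2; 1; 1; 1; 1; 1; 3]; [:: 2; 1; 1; 2; 1; 1; 2];
      [:: 2; 1; 1; 3; 1; 1; 1]; [:: 2; 1; 2; 1; 1; 1; 2]; [:: 2; 1; 2; 2; 1; 1; 1];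
      [:: 2; 1; 3; 1; 1; 1; 1]; [:: 3; 2; 1; 1; 1; 1; 1];
      [:: 4; 1; 1; 1; 1; 1; 1]], [:: 1; 1; 2; 2; 1; 1; 2]);
  ([:: [:: 1; 1; 1; 1; 1; 4; 1]; [:: 1; 1; 1; 4; 1; 1; 1]; [:: 1; 1; 2; 2; 1; 2; 1];
      [:: 1; 1; 4; 1; 1; 1; 1]; [:: 2; 1; 1; 1; 1; 3; 1]; [:: 2; 1; 1; 2; 1; 2; 1];
      [:: 2; 1; 1; 3; 1; 1; 1]; [:: 2; 1; 2; 1; 1; 2; 1]; [:: 2; 1; 2; 2; 1; 1; 1];
      [:: 2; 1; 3; 1; 1; 1; 1]; [:: 3; 2; 1; 1; 1; 1; 1];
      [:: 4; 1; 1; 1; 1; 1; 1]], [:: 1; 1; 2; 2; 1; 2; 1]);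
  ([:: [:: 1; 1; 1; 1; 4; 1; 1]; [:: 1; 1; 1; 4; 1; 1; 1]; [:: 1; 1; 2; 2; 2; 1; 1];
      [:: 1; 1; 4; 1; 1; 1; 1]; [:: 2; 1; 1; 1; 3; 1; 1]; [:: 2; 1; 1; 2; 2; 1; 1];
      [:: 2; 1; 1; 3; 1; 1; 1]; [:: 2; 1; 2; 1; 2; 1; 1]; [:: 2; 1; 2; 2; 1; 1; 1];
      [:: 2; 1; 3; 1; 1; 1; 1]; [:: 3; 2; 1; 1; 1; 1; 1];
      [:: 4; 1; 1; 1; 1; 1; 1]], [:: 1; 1; 2; 2; 2; 1; 1]);
  ([:: [:: 1; 1; 1; 1; 1; 1; 4]; [:: 1; 1; 1; 1; 1; 4; 1]; [:: 1; 2; 1; 1; 1; 2; 2];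
      [:: 1; 4; 1; 1; 1; 1; 1]; [:: 2; 1; 1; 1; 1; 1; 3]; [:: 2; 1; 1; 1; 1; 2; 2];
      [:: 2; 1; 1; 1; 1; 3; 1]; [:: 2; 2; 1; 1; 1; 1; 2]; [:: 2; 2; 1; 1; 1; 2; 1];
      [:: 2; 3; 1; 1; 1; 1; 1]; [:: 3; 2; 1; 1; 1; 1; 1];
      [:: 4; 1; 1; 1; 1; 1; 1]], [:: 1; 2; 1; 1; 1; 2; 2]);
  ([:: [:: 1; 1; 1; 1; 1; 1; 4]; [:: 1; 1; 1; 1; 4; 1; 1]; [:: 1; 2; 1; 1; 2; 1; 2];
      [:: 1; 4; 1; 1; 1; 1; 1]; [:: 2; 1; 1; 1; 1; 1; 3]; [:: 2; 1; 1; 1; 2; 1; 2];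
      [:: 2; 1; 1; 1; 3; 1; 1]; [:: 2; 2; 1; 1; 1; 1; 2]; [:: 2; 2; 1; 1; 2; 1; 1];
      [:: 2; 3; 1; 1; 1; 1; 1]; [:: 3; 2; 1; 1; 1; 1; 1];
      [:: 4; 1; 1; 1; 1; 1; 1]], [:: 1; 2; 1; 1; 2; 1; 2]);
  ([:: [:: 1; 1; 1; 1; 1; 4; 1]; [:: 1; 1; 1; 1; 4; 1; 1]; [:: 1; 2; 1; 1; 2; 2; 1];
      [:: 1; 4; 1; 1; 1; 1; 1]; [:: 2; 1; 1; 1; 1; 3; 1]; [:: 2; 1; 1; 1; 2; 2; 1];
      [:: 2; 1; 1; 1; 3; 1; 1]; [:: 2; 2; 1; 1; 1; 2; 1]; [:: 2; 2; 1; 1; 2; 1; 1];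
      [:: 2; 3; 1; 1; 1; 1; 1]; [:: 3; 2; 1; 1; 1; 1; 1];
      [:: 4; 1; 1; 1; 1; 1; 1]], [:: 1; 2; 1; 1; 2; 2; 1]);
  ([:: [:: 1; 1; 1; 1; 1; 1; 4]; [:: 1; 1; 1; 4; 1; 1; 1]; [:: 1; 2; 1; 2; 1; 1; 2];
      [:: 1; 4; 1; 1; 1; 1; 1]; [:: 2; 1; 1; 1; 1; 1; 3]; [:: 2; 1; 1; 2; 1; 1; 2];
      [:: 2; 1; 1; 3; 1; 1; 1]; [:: 2; 2; 1; 1; 1; 1; 2]; [:: 2; 2; 1; 2; 1; 1; 1];
      [:: 2; 3; 1; 1; 1; 1; 1]; [:: 3; 2; 1; 1; 1; 1; 1];
      [:: 4; 1; 1; 1; 1; 1; 1]], [:: 1; 2; 1; 2; 1; 1; 2]);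
  ([:: [:: 1; 1; 1; 1; 1; 4; 1]; [:: 1; 1; 1; 4; 1; 1; 1]; [:: 1; 2; 1; 2; 1; 2; 1];
      [:: 1; 4; 1; 1; 1; 1; 1]; [:: 2; 1; 1; 1; 1; 3; 1]; [:: 2; 1; 1; 2; 1; 2; 1];
      [:: 2; 1; 1; 3; 1; 1; 1]; [:: 2; 2; 1; 1; 1; 2; 1]; [:: 2; 2; 1; 2; 1; 1; 1];
      [:: 2; 3; 1; 1; 1; 1; 1]; [:: 3; 2; 1; 1; 1; 1; 1];
      [:: 4; 1; 1; 1; 1; 1; 1]], [:: 1; 2; 1; 2; 1; 2; 1]);
  ([:: [:: 1; 1; 1; 1; 4; 1; 1]; [:: 1; 1; 1; 4; 1; 1; 1]; [:: 1; 2; 1; 2; 2; 1; 1];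
      [:: 1; 4; 1; 1; 1; 1; 1]; [:: 2; 1; 1; 1; 3; 1; 1]; [:: 2; 1; 1; 2; 2; 1; 1];
      [:: 2; 1; 1; 3; 1; 1; 1]; [:: 2; 2; 1; 1; 2; 1; 1]; [:: 2; 2; 1; 2; 1; 1; 1];
      [:: 2; 3; 1; 1; 1; 1; 1]; [:: 3; 2; 1; 1; 1; 1; 1];
      [:: 4; 1; 1; 1; 1; 1; 1]], [:: 1; 2; 1; 2; 2; 1; 1]);
  ([:: [:: 1; 1; 1; 1; 1; 1; 4]; [:: 1; 1; 4; 1; 1; 1; 1]; [:: 1; 2; 2; 1; 1; 1; 2];
      [:: 1; 4; 1; 1; 1; 1; 1]; [:: 2; 1; 1; 1; 1; 1; 3]; [:: 2; 1; 2; 1; 1; 1; 2];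
      [:: 2; 1; 3; 1; 1; 1; 1]; [:: 2; 2; 1; 1; 1; 1; 2]; [:: 2; 2; 2; 1; 1; 1; 1];
      [:: 2; 3; 1; 1; 1; 1; 1]; [:: 3; 2; 1; 1; 1; 1; 1];
      [:: 4; 1; 1; 1; 1; 1; 1]], [:: 1; 2; 2; 1; 1; 1; 2]);
  ([:: [:: 1; 1; 1; 1; 1; 4; 1]; [:: 1; 1; 4; 1; 1; 1; 1]; [:: 1; 2; 2; 1; 1; 2; 1];
      [:: 1; 4; 1; 1; 1; 1; 1]; [:: 2; 1; 1; 1; 1; 3; 1]; [:: 2; 1; 2; 1; 1; 2; 1];
      [:: 2; 1; 3; 1; 1; 1; 1]; [:: 2; 2; 1; 1; 1; 2; 1]; [:: 2; 2; 2; 1; 1; 1; 1];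
      [:: 2; 3; 1; 1; 1; 1; 1]; [:: 3; 2; 1; 1; 1; 1; 1];
      [:: 4; 1; 1; 1; 1; 1; 1]], [:: 1; 2; 2; 1; 1; 2; 1]);
  ([:: [:: 1; 1; 1; 1; 4; 1; 1]; [:: 1; 1; 4; 1; 1; 1; 1]; [:: 1; 2; 2; 1; 2; 1; 1];
      [:: 1; 4; 1; 1; 1; 1; 1]; [:: 2; 1; 1; 1; 3; 1; 1]; [:: 2; 1; 2; 1; 2; 1; 1];
      [:: 2; 1; 3; 1; 1; 1; 1]; [:: 2; 2; 1; 1; 2; 1; 1]; [:: 2; 2; 2; 1; 1; 1; 1];
      [:: 2; 3; 1; 1; 1; 1; 1]; [:: 3; 2; 1; 1; 1; 1; 1];
      [:: 4; 1; 1; 1; 1; 1; 1]], [:: 1; 2; 2; 1; 2; 1; 1]);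
  ([:: [:: 1; 1; 1; 4; 1; 1; 1]; [:: 1; 1; 4; 1; 1; 1; 1]; [:: 1; 2; 2; 2; 1; 1; 1];
      [:: 1; 4; 1; 1; 1; 1; 1]; [:: 2; 1; 1; 3; 1; 1; 1]; [:: 2; 1; 2; 2; 1; 1; 1];
      [:: 2; 1; 3; 1; 1; 1; 1]; [:: 2; 2; 1; 2; 1; 1; 1]; [:: 2; 2; 2; 1; 1; 1; 1];
      [:: 2; 3; 1; 1; 1; 1; 1]; [:: 3; 2; 1; 1; 1; 1; 1];
      [:: 4; 1; 1; 1; 1; 1; 1]], [:: 1; 2; 2; 2; 1; 1; 1])].

Definition scert_7_4 : sub_cert :=
  [:: ([:: [:: 1; 1; 1; 1; 2; 2; 1]], [:: ], [:: 1; 1; 1; 1; 2; 2; 2]);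
  ([:: [:: 1; 1; 1; 2; 1; 2; 1]], [:: ], [:: 1; 1; 1; 2; 1; 2; 2]);
  ([:: [:: 1; 1; 1; 2; 2; 1; 1]], [:: ], [:: 1; 1; 1; 2; 2; 1; 2]);
  ([:: [:: 1; 1; 2; 1; 1; 2; 1]], [:: ], [:: 1; 1; 2; 1; 1; 2; 2]);
  ([:: [:: 1; 1; 2; 1; 2; 1; 1]], [:: ], [:: 1; 1; 2; 1; 2; 1; 2]);
  ([:: [:: 1; 1; 2; 2; 1; 1; 1]], [:: ], [:: 1; 1; 2; 2; 1; 1; 2]);
  ([:: [:: 1; 2; 1; 1; 1; 2; 1]], [:: ], [:: 1; 2; 1; 1; 1; 2; 2]);
  ([:: [:: 1; 2; 1; 1; 2; 1; 1]], [:: ], [:: 1; 2; 1; 1; 2; 1; 2]);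
  ([:: [:: 1; 2; 1; 2; 1; 1; 1]], [:: ], [:: 1; 2; 1; 2; 1; 1; 2]);
  ([:: [:: 1; 2; 2; 1; 1; 1; 1]], [:: ], [:: 1; 2; 2; 1; 1; 1; 2]);
  ([:: [:: 1; 1; 1; 1; 1; 2; 2]; [:: 1; 1; 1; 1; 2; 2; 1]; [:: 1; 1; 1; 2; 1; 2; 1];
      [:: 1; 1; 2; 1; 1; 2; 1]; [:: 1; 2; 1; 1; 1; 2; 1]], [:: ], [:: 2; 1; 1; 1; 1; 2; 2]);
  ([:: [:: 1; 1; 1; 1; 2; 1; 2]; [:: 1; 1; 1; 1; 2; 2; 1]; [:: 1; 1; 1; 2; 2; 1; 1];
      [:: 1; 1; 2; 1; 2; 1; 1]; [:: 1; 2; 1; 1; 2; 1; 1]], [:: ], [:: 2; 1; 1; 1; 2; 1; 2]);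
  ([:: [:: 1; 1; 1; 2; 1; 1; 2]; [:: 1; 1; 1; 2; 1; 2; 1]; [:: 1; 1; 1; 2; 2; 1; 1];
      [:: 1; 1; 2; 2; 1; 1; 1]; [:: 1; 2; 1; 2; 1; 1; 1]], [:: ], [:: 2; 1; 1; 2; 1; 1; 2]);
  ([:: [:: 1; 1; 2; 1; 1; 1; 2]; [:: 1; 1; 2; 1; 1; 2; 1]; [:: 1; 1; 2; 1; 2; 1; 1];
      [:: 1; 1; 2; 2; 1; 1; 1]; [:: 1; 2; 2; 1; 1; 1; 1]], [:: ], [:: 2; 1; 2; 1; 1; 1; 2]);
  ([:: [:: 1; 2; 1; 1; 1; 1; 2]; [:: 1; 2; 1; 1; 1; 2; 1]; [:: 1; 2; 1; 1; 2; 1; 1];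
      [:: 1; 2; 1; 2; 1; 1; 1]; [:: 1; 2; 2; 1; 1; 1; 1]], [:: ], [:: 2; 2; 1; 1; 1; 1; 2])].

Definition qcert_7_5 : quot_cert :=
  [:: ([:: [:: 1; 1; 1; 1; 1; 2; 3]; [:: 2; 1; 1; 1; 1; 1; 3]], [:: 1; 1; 1; 1; 1; 2; 3]);
  ([:: [:: 1; 1; 1; 1; 1; 3; 2]; [:: 2; 1; 1; 1; 1; 3; 1]], [:: 1; 1; 1; 1; 1; 3; 2]);
  ([:: [:: 1; 1; 1; 1; 2; 1; 3]; [:: 2; 1; 1; 1; 1; 1; 3]], [:: 1; 1; 1; 1; 2; 1; 3]);
  ([:: [:: 1; 1; 1; 1; 2; 3; 1]; [:: 2; 1; 1; 1; 1; 3; 1]], [:: 1; 1; 1; 1; 2; 3; 1]);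
  ([:: [:: 1; 1; 1; 1; 3; 1; 2]; [:: 2; 1; 1; 1; 3; 1; 1]], [:: 1; 1; 1; 1; 3; 1; 2]);
  ([:: [:: 1; 1; 1; 1; 3; 2; 1]; [:: 2; 1; 1; 1; 3; 1; 1]], [:: 1; 1; 1; 1; 3; 2; 1]);
  ([:: [:: 1; 1; 1; 2; 1; 1; 3]; [:: 2; 1; 1; 1; 1; 1; 3]], [:: 1; 1; 1; 2; 1; 1; 3]);
  ([:: [:: 1; 1; 1; 2; 1; 3; 1]; [:: 2; 1; 1; 1; 1; 3; 1]], [:: 1; 1; 1; 2; 1; 3; 1]);
  ([:: [:: 1; 1; 1; 2; 3; 1; 1]; [:: 2; 1; 1; 1; 3; 1; 1]], [:: 1; 1; 1; 2; 3; 1; 1]);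
  ([:: [:: 1; 1; 1; 3; 1; 1; 2]; [:: 2; 1; 1; 3; 1; 1; 1]], [:: 1; 1; 1; 3; 1; 1; 2]);
  ([:: [:: 1; 1; 1; 3; 1; 2; 1]; [:: 2; 1; 1; 3; 1; 1; 1]], [:: 1; 1; 1; 3; 1; 2; 1]);
  ([:: [:: 1; 1; 1; 3; 2; 1; 1]; [:: 2; 1; 1; 3; 1; 1; 1]], [:: 1; 1; 1; 3; 2; 1; 1]);
  ([:: [:: 1; 1; 2; 1; 1; 1; 3]; [:: 2; 1; 1; 1; 1; 1; 3]], [:: 1; 1; 2; 1; 1; 1; 3]);
  ([:: [:: 1; 1; 2; 1; 1; 3; 1]; [:: 2; 1; 1; 1; 1; 3; 1]], [:: 1; 1; 2; 1; 1; 3; 1]);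
  ([:: [:: 1; 1; 2; 1; 3; 1; 1]; [:: 2; 1; 1; 1; 3; 1; 1]], [:: 1; 1; 2; 1; 3; 1; 1]);
  ([:: [:: 1; 1; 2; 3; 1; 1; 1]; [:: 2; 1; 1; 3; 1; 1; 1]], [:: 1; 1; 2; 3; 1; 1; 1]);
  ([:: [:: 1; 1; 3; 1; 1; 1; 2]; [:: 2; 1; 3; 1; 1; 1; 1]], [:: 1; 1; 3; 1; 1; 1; 2]);
  ([:: [:: 1; 1; 3; 1; 1; 2; 1]; [:: 2; 1; 3; 1; 1; 1; 1]], [:: 1; 1; 3; 1; 1; 2; 1]);
  ([:: [:: 1; 1; 3; 1; 2; 1; 1]; [:: 2; 1; 3; 1; 1; 1; 1]], [:: 1; 1; 3; 1; 2; 1; 1]);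
  ([:: [:: 1; 1; 3; 2; 1; 1; 1]; [:: 2; 1; 3; 1; 1; 1; 1]], [:: 1; 1; 3; 2; 1; 1; 1]);
  ([:: [:: 1; 2; 1; 1; 1; 1; 3]; [:: 2; 1; 1; 1; 1; 1; 3]], [:: 1; 2; 1; 1; 1; 1; 3]);
  ([:: [:: 1; 2; 1; 1; 1; 3; 1]; [:: 2; 1; 1; 1; 1; 3; 1]], [:: 1; 2; 1; 1; 1; 3; 1]);
  ([:: [:: 1; 2; 1; 1; 3; 1; 1]; [:: 2; 1; 1; 1; 3; 1; 1]], [:: 1; 2; 1; 1; 3; 1; 1]);
  ([:: [:: 1; 2; 1; 3; 1; 1; 1]; [:: 2; 1; 1; 3; 1; 1; 1]], [:: 1; 2; 1; 3; 1; 1; 1]);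
  ([:: [:: 1; 2; 3; 1; 1; 1; 1]; [:: 2; 1; 3; 1; 1; 1; 1]], [:: 1; 2; 3; 1; 1; 1; 1]);
  ([:: [:: 1; 3; 1; 1; 1; 1; 2]; [:: 2; 3; 1; 1; 1; 1; 1]], [:: 1; 3; 1; 1; 1; 1; 2]);
  ([:: [:: 1; 3; 1; 1; 1; 2; 1]; [:: 2; 3; 1; 1; 1; 1; 1]], [:: 1; 3; 1; 1; 1; 2; 1]);
  ([:: [:: 1; 3; 1; 1; 2; 1; 1]; [:: 2; 3; 1; 1; 1; 1; 1]], [:: 1; 3; 1; 1; 2; 1; 1]);
  ([:: [:: 1; 3; 1; 2; 1; 1; 1]; [:: 2; 3; 1; 1; 1; 1; 1]], [:: 1; 3; 1; 2; 1; 1; 1]);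
  ([:: [:: 1; 3; 2; 1; 1; 1; 1]; [:: 2; 3; 1; 1; 1; 1; 1]], [:: 1; 3; 2; 1; 1; 1; 1]);
  ([:: [:: 3; 1; 1; 1; 1; 1; 2]; [:: 3; 2; 1; 1; 1; 1; 1]], [:: 3; 1; 1; 1; 1; 1; 2]);
  ([:: [:: 3; 1; 1; 1; 1; 2; 1]; [:: 3; 2; 1; 1; 1; 1; 1]], [:: 3; 1; 1; 1; 1; 2; 1]);
  ([:: [:: 3; 1; 1; 1; 2; 1; 1]; [:: 3; 2; 1; 1; 1; 1; 1]], [:: 3; 1; 1; 1; 2; 1; 1]);
  ([:: [:: 3; 1; 1; 2; 1; 1; 1]; [:: 3; 2; 1; 1; 1; 1; 1]], [:: 3; 1; 1; 2; 1; 1; 1]);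
  ([:: [:: 3; 1; 2; 1; 1; 1; 1]; [:: 3; 2; 1; 1; 1; 1; 1]], [:: 3; 1; 2; 1; 1; 1; 1])].

Definition scert_7_5 : sub_cert :=
  [:: ([:: ], [:: [:: 1; 1; 1; 1; 1; 1; 4]], [:: 1; 1; 1; 1; 1; 1; 4]);
  ([:: [:: 1; 1; 1; 1; 1; 1; 3]], [:: [:: 1; 1; 1; 1; 1; 1; 4]], [:: 1; 1; 1; 1; 1; 2; 3]);
  ([:: [:: 1; 1; 1; 1; 1; 3; 1]], [:: [:: 1; 1; 1; 1; 1; 4; 1]], [:: 1; 1; 1; 1; 1; 3; 2]);
  ([:: ], [:: [:: 1; 1; 1; 1; 1; 4; 1]], [:: 1; 1; 1; 1; 1; 4; 1]);
  ([:: ], [:: [:: 1; 1; 1; 1; 2; 2; 2]], [:: 1; 1; 1; 1; 2; 2; 2]);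
  ([:: [:: 1; 1; 1; 1; 3; 1; 1]], [:: [:: 1; 1; 1; 1; 4; 1; 1]], [:: 1; 1; 1; 1; 3; 1; 2]);
  ([:: ], [:: [:: 1; 1; 1; 1; 4; 1; 1]], [:: 1; 1; 1; 1; 4; 1; 1]);
  ([:: ], [:: [:: 1; 1; 1; 2; 1; 2; 2]], [:: 1; 1; 1; 2; 1; 2; 2]);
  ([:: ], [:: [:: 1; 1; 1; 2; 2; 1; 2]], [:: 1; 1; 1; 2; 2; 1; 2]);
  ([:: ], [:: [:: 1; 1; 1; 2; 2; 2; 1]], [:: 1; 1; 1; 2; 2; 2; 1]);
  ([:: [:: 1; 1; 1; 3; 1; 1; 1]], [:: [:: 1; 1; 1; 4; 1; 1; 1]], [:: 1; 1; 1; 3; 1; 1; 2]);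
  ([:: ], [:: [:: 1; 1; 1; 4; 1; 1; 1]], [:: 1; 1; 1; 4; 1; 1; 1]);
  ([:: ], [:: [:: 1; 1; 2; 1; 1; 2; 2]], [:: 1; 1; 2; 1; 1; 2; 2]);
  ([:: ], [:: [:: 1; 1; 2; 1; 2; 1; 2]], [:: 1; 1; 2; 1; 2; 1; 2]);
  ([:: ], [:: [:: 1; 1; 2; 1; 2; 2; 1]], [:: 1; 1; 2; 1; 2; 2; 1]);
  ([:: ], [:: [:: 1; 1; 2; 2; 1; 1; 2]], [:: 1; 1; 2; 2; 1; 1; 2]);
  ([:: ], [:: [:: 1; 1; 2; 2; 1; 2; 1]], [:: 1; 1; 2; 2; 1; 2; 1]);
  ([:: ], [:: [:: 1; 1; 2; 2; 2; 1; 1]], [:: 1; 1; 2; 2; 2; 1; 1]);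
  ([:: [:: 1; 1; 3; 1; 1; 1; 1]; [:: 1; 2; 1; 1; 1; 1; 2]; [:: 1; 2; 1; 1; 1; 2; 1];
      [:: 1; 2; 1; 1; 2; 1; 1]; [:: 1; 2; 1; 2; 1; 1; 1]; [:: 1; 2; 2; 1; 1; 1; 1];
      [:: 1; 1; 1; 1; 1; 1; 2]; [:: 1; 1; 1; 1; 1; 2; 1]; [:: 1; 1; 1; 1; 2; 1; 1];
      [:: 1; 1; 1; 2; 1; 1; 1]; [:: 1; 1; 2; 1; 1; 1; 1]], [:: [:: 1; 1; 1; 1; 1; 1; 4];
      [:: 1; 1; 1; 1; 1; 4; 1]; [:: 1; 1; 1; 1; 2; 2; 2]; [:: 1; 1; 1; 1; 4; 1; 1];
      [:: 1; 1; 1; 2; 1; 2; 2]; [:: 1; 1; 1; 2; 2; 1; 2]; [:: 1; 1; 1; 2; 2; 2; 1];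
      [:: 1; 1; 1; 4; 1; 1; 1]; [:: 1; 1; 2; 1; 1; 2; 2]; [:: 1; 1; 2; 1; 2; 1; 2];
      [:: 1; 1; 2; 1; 2; 2; 1]; [:: 1; 1; 2; 2; 1; 1; 2]; [:: 1; 1; 2; 2; 1; 2; 1];
      [:: 1; 1; 2; 2; 2; 1; 1]], [:: 1; 1; 3; 1; 1; 1; 2]);
  ([:: [:: 1; 2; 1; 1; 1; 1; 2]; [:: 1; 2; 1; 1; 1; 2; 1]; [:: 1; 2; 1; 1; 2; 1; 1];
      [:: 1; 2; 1; 2; 1; 1; 1]; [:: 1; 2; 2; 1; 1; 1; 1]; [:: 1; 1; 1; 1; 1; 1; 2];
      [:: 1; 1; 1; 1; 1; 2; 1]; [:: 1; 1; 1; 1; 2; 1; 1]; [:: 1; 1; 1; 2; 1; 1; 1];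
      [:: 1; 1; 2; 1; 1; 1; 1]], [:: [:: 1; 1; 1; 1; 1; 1; 4]; [:: 1; 1; 1; 1; 1; 4; 1];
      [:: 1; 1; 1; 1; 2; 2; 2]; [:: 1; 1; 1; 1; 4; 1; 1]; [:: 1; 1; 1; 2; 1; 2; 2];
      [:: 1; 1; 1; 2; 2; 1; 2]; [:: 1; 1; 1; 2; 2; 2; 1]; [:: 1; 1; 1; 4; 1; 1; 1];
      [:: 1; 1; 2; 1; 1; 2; 2]; [:: 1; 1; 2; 1; 2; 1; 2]; [:: 1; 1; 2; 1; 2; 2; 1];
      [:: 1; 1; 2; 2; 1; 1; 2]; [:: 1; 1; 2; 2; 1; 2; 1];
      [:: 1; 1; 2; 2; 2; 1; 1]], [:: 1; 1; 4; 1; 1; 1; 1]);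
  ([:: ], [:: [:: 1; 2; 1; 1; 1; 2; 2]], [:: 1; 2; 1; 1; 1; 2; 2]);
  ([:: ], [:: [:: 1; 2; 1; 1; 2; 1; 2]], [:: 1; 2; 1; 1; 2; 1; 2]);
  ([:: ], [:: [:: 1; 2; 1; 1; 2; 2; 1]], [:: 1; 2; 1; 1; 2; 2; 1]);
  ([:: ], [:: [:: 1; 2; 1; 2; 1; 1; 2]], [:: 1; 2; 1; 2; 1; 1; 2]);
  ([:: ], [:: [:: 1; 2; 1; 2; 1; 2; 1]], [:: 1; 2; 1; 2; 1; 2; 1]);
  ([:: ], [:: [:: 1; 2; 1; 2; 2; 1; 1]], [:: 1; 2; 1; 2; 2; 1; 1]);
  ([:: [:: 1; 1; 1; 1; 1; 2; 2]; [:: 1; 1; 1; 1; 2; 1; 2]; [:: 1; 1; 1; 2; 1; 1; 2];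
      [:: 1; 1; 2; 1; 1; 1; 2]; [:: 1; 2; 1; 1; 1; 1; 2];
      [:: 1; 1; 1; 1; 1; 1; 2]], [:: [:: 1; 1; 1; 1; 1; 1; 4]; [:: 1; 1; 1; 1; 2; 2; 2];
      [:: 1; 1; 1; 2; 1; 2; 2]; [:: 1; 1; 1; 2; 2; 1; 2]; [:: 1; 1; 2; 1; 1; 2; 2];
      [:: 1; 1; 2; 1; 2; 1; 2]; [:: 1; 1; 2; 2; 1; 1; 2]; [:: 1; 2; 1; 1; 1; 2; 2];
      [:: 1; 2; 1; 1; 2; 1; 2]; [:: 1; 2; 1; 2; 1; 1; 2]], [:: 1; 2; 2; 1; 1; 1; 2]);
  ([:: [:: 1; 1; 1; 1; 1; 2; 2]; [:: 1; 1; 1; 1; 2; 2; 1]; [:: 1; 1; 1; 2; 1; 2; 1];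
      [:: 1; 1; 2; 1; 1; 2; 1]; [:: 1; 2; 1; 1; 1; 2; 1];
      [:: 1; 1; 1; 1; 1; 2; 1]], [:: [:: 1; 1; 1; 1; 1; 4; 1]; [:: 1; 1; 1; 1; 2; 2; 2];
      [:: 1; 1; 1; 2; 1; 2; 2]; [:: 1; 1; 1; 2; 2; 2; 1]; [:: 1; 1; 2; 1; 1; 2; 2];
      [:: 1; 1; 2; 1; 2; 2; 1]; [:: 1; 1; 2; 2; 1; 2; 1]; [:: 1; 2; 1; 1; 1; 2; 2];
      [:: 1; 2; 1; 1; 2; 2; 1]; [:: 1; 2; 1; 2; 1; 2; 1]], [:: 1; 2; 2; 1; 1; 2; 1]);
  ([:: [:: 1; 1; 1; 1; 2; 1; 2]; [:: 1; 1; 1; 1; 2; 2; 1]; [:: 1; 1; 1; 2; 2; 1; 1];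
      [:: 1; 1; 2; 1; 2; 1; 1]; [:: 1; 2; 1; 1; 2; 1; 1];
      [:: 1; 1; 1; 1; 2; 1; 1]], [:: [:: 1; 1; 1; 1; 2; 2; 2]; [:: 1; 1; 1; 1; 4; 1; 1];
      [:: 1; 1; 1; 2; 2; 1; 2]; [:: 1; 1; 1; 2; 2; 2; 1]; [:: 1; 1; 2; 1; 2; 1; 2];
      [:: 1; 1; 2; 1; 2; 2; 1]; [:: 1; 1; 2; 2; 2; 1; 1]; [:: 1; 2; 1; 1; 2; 1; 2];
      [:: 1; 2; 1; 1; 2; 2; 1]; [:: 1; 2; 1; 2; 2; 1; 1]], [:: 1; 2; 2; 1; 2; 1; 1]);
  ([:: [:: 1; 1; 1; 2; 1; 1; 2]; [:: 1; 1; 1; 2; 1; 2; 1]; [:: 1; 1; 1; 2; 2; 1; 1];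
      [:: 1; 1; 2; 2; 1; 1; 1]; [:: 1; 2; 1; 2; 1; 1; 1];
      [:: 1; 1; 1; 2; 1; 1; 1]], [:: [:: 1; 1; 1; 2; 1; 2; 2]; [:: 1; 1; 1; 2; 2; 1; 2];
      [:: 1; 1; 1; 2; 2; 2; 1]; [:: 1; 1; 1; 4; 1; 1; 1]; [:: 1; 1; 2; 2; 1; 1; 2];
      [:: 1; 1; 2; 2; 1; 2; 1]; [:: 1; 1; 2; 2; 2; 1; 1]; [:: 1; 2; 1; 2; 1; 1; 2];
      [:: 1; 2; 1; 2; 1; 2; 1]; [:: 1; 2; 1; 2; 2; 1; 1]], [:: 1; 2; 2; 2; 1; 1; 1]);
  ([:: [:: 1; 1; 2; 1; 1; 1; 2]; [:: 1; 1; 2; 1; 1; 2; 1]; [:: 1; 1; 2; 1; 2; 1; 1];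
      [:: 1; 1; 2; 2; 1; 1; 1]; [:: 1; 2; 2; 1; 1; 1; 1]; [:: 1; 3; 1; 1; 1; 1; 1];
      [:: 1; 1; 1; 1; 1; 1; 2]; [:: 1; 1; 1; 1; 1; 2; 1]; [:: 1; 1; 1; 1; 2; 1; 1];
      [:: 1; 1; 1; 2; 1; 1; 1]; [:: 1; 2; 1; 1; 1; 1; 1]], [:: [:: 1; 1; 1; 1; 1; 1; 4];
      [:: 1; 1; 1; 1; 1; 4; 1]; [:: 1; 1; 1; 1; 2; 2; 2]; [:: 1; 1; 1; 1; 4; 1; 1];
      [:: 1; 1; 1; 2; 1; 2; 2]; [:: 1; 1; 1; 2; 2; 1; 2]; [:: 1; 1; 1; 2; 2; 2; 1];
      [:: 1; 1; 1; 4; 1; 1; 1]; [:: 1; 2; 1; 1; 1; 2; 2]; [:: 1; 2; 1; 1; 2; 1; 2];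
      [:: 1; 2; 1; 1; 2; 2; 1]; [:: 1; 2; 1; 2; 1; 1; 2]; [:: 1; 2; 1; 2; 1; 2; 1];
      [:: 1; 2; 1; 2; 2; 1; 1]], [:: 1; 3; 1; 1; 1; 1; 2]);
  ([:: [:: 1; 1; 2; 1; 1; 1; 2]; [:: 1; 1; 2; 1; 1; 2; 1]; [:: 1; 1; 2; 1; 2; 1; 1];
      [:: 1; 1; 2; 2; 1; 1; 1]; [:: 1; 2; 2; 1; 1; 1; 1]; [:: 1; 1; 1; 1; 1; 1; 2];
      [:: 1; 1; 1; 1; 1; 2; 1]; [:: 1; 1; 1; 1; 2; 1; 1]; [:: 1; 1; 1; 2; 1; 1; 1];
      [:: 1; 2; 1; 1; 1; 1; 1]], [:: [:: 1; 1; 1; 1; 1; 1; 4]; [:: 1; 1; 1; 1; 1; 4; 1];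
      [:: 1; 1; 1; 1; 2; 2; 2]; [:: 1; 1; 1; 1; 4; 1; 1]; [:: 1; 1; 1; 2; 1; 2; 2];
      [:: 1; 1; 1; 2; 2; 1; 2]; [:: 1; 1; 1; 2; 2; 2; 1]; [:: 1; 1; 1; 4; 1; 1; 1];
      [:: 1; 2; 1; 1; 1; 2; 2]; [:: 1; 2; 1; 1; 2; 1; 2]; [:: 1; 2; 1; 1; 2; 2; 1];
      [:: 1; 2; 1; 2; 1; 1; 2]; [:: 1; 2; 1; 2; 1; 2; 1];
      [:: 1; 2; 1; 2; 2; 1; 1]], [:: 1; 4; 1; 1; 1; 1; 1]);
  ([:: [:: 1; 1; 1; 1; 1; 2; 2]], [:: [:: 1; 1; 1; 1; 2; 2; 2]; [:: 1; 1; 1; 2; 1; 2; 2];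
      [:: 1; 1; 2; 1; 1; 2; 2]; [:: 1; 2; 1; 1; 1; 2; 2]], [:: 2; 1; 1; 1; 1; 2; 2]);
  ([:: [:: 1; 1; 1; 1; 2; 1; 2]], [:: [:: 1; 1; 1; 1; 2; 2; 2]; [:: 1; 1; 1; 2; 2; 1; 2];
      [:: 1; 1; 2; 1; 2; 1; 2]; [:: 1; 2; 1; 1; 2; 1; 2]], [:: 2; 1; 1; 1; 2; 1; 2]);
  ([:: [:: 1; 1; 1; 1; 2; 2; 1]], [:: [:: 1; 1; 1; 1; 2; 2; 2]; [:: 1; 1; 1; 2; 2; 2; 1];
      [:: 1; 1; 2; 1; 2; 2; 1]; [:: 1; 2; 1; 1; 2; 2; 1]], [:: 2; 1; 1; 1; 2; 2; 1]);
  ([:: [:: 1; 1; 1; 2; 1; 1; 2]], [:: [:: 1; 1; 1; 2; 1; 2; 2]; [:: 1; 1; 1; 2; 2; 1; 2];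
      [:: 1; 1; 2; 2; 1; 1; 2]; [:: 1; 2; 1; 2; 1; 1; 2]], [:: 2; 1; 1; 2; 1; 1; 2]);
  ([:: [:: 1; 1; 1; 2; 1; 2; 1]], [:: [:: 1; 1; 1; 2; 1; 2; 2]; [:: 1; 1; 1; 2; 2; 2; 1];
      [:: 1; 1; 2; 2; 1; 2; 1]; [:: 1; 2; 1; 2; 1; 2; 1]], [:: 2; 1; 1; 2; 1; 2; 1]);
  ([:: [:: 1; 1; 1; 2; 2; 1; 1]], [:: [:: 1; 1; 1; 2; 2; 1; 2]; [:: 1; 1; 1; 2; 2; 2; 1];
      [:: 1; 1; 2; 2; 2; 1; 1]; [:: 1; 2; 1; 2; 2; 1; 1]], [:: 2; 1; 1; 2; 2; 1; 1]);
  ([:: [:: 1; 1; 1; 1; 1; 2; 2]; [:: 1; 1; 1; 1; 2; 1; 2]; [:: 1; 1; 1; 2; 1; 1; 2];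
      [:: 1; 2; 1; 1; 1; 1; 2]; [:: 1; 1; 1; 1; 1; 1; 2]], [:: [:: 1; 1; 1; 1; 1; 1; 4];
      [:: 1; 1; 1; 1; 2; 2; 2]; [:: 1; 1; 1; 2; 1; 2; 2]; [:: 1; 1; 1; 2; 2; 1; 2];
      [:: 1; 2; 1; 1; 1; 2; 2]; [:: 1; 2; 1; 1; 2; 1; 2];
      [:: 1; 2; 1; 2; 1; 1; 2]], [:: 2; 1; 2; 1; 1; 1; 2]);
  ([:: [:: 1; 1; 1; 1; 1; 2; 2]; [:: 1; 1; 1; 1; 2; 2; 1]; [:: 1; 1; 1; 2; 1; 2; 1];
      [:: 1; 2; 1; 1; 1; 2; 1]; [:: 1; 1; 1; 1; 1; 2; 1]], [:: [:: 1; 1; 1; 1; 1; 4; 1];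
      [:: 1; 1; 1; 1; 2; 2; 2]; [:: 1; 1; 1; 2; 1; 2; 2]; [:: 1; 1; 1; 2; 2; 2; 1];
      [:: 1; 2; 1; 1; 1; 2; 2]; [:: 1; 2; 1; 1; 2; 2; 1];
      [:: 1; 2; 1; 2; 1; 2; 1]], [:: 2; 1; 2; 1; 1; 2; 1]);
  ([:: [:: 1; 1; 1; 1; 2; 1; 2]; [:: 1; 1; 1; 1; 2; 2; 1]; [:: 1; 1; 1; 2; 2; 1; 1];
      [:: 1; 2; 1; 1; 2; 1; 1]; [:: 1; 1; 1; 1; 2; 1; 1]], [:: [:: 1; 1; 1; 1; 2; 2; 2];
      [:: 1; 1; 1; 1; 4; 1; 1]; [:: 1; 1; 1; 2; 2; 1; 2]; [:: 1; 1; 1; 2; 2; 2; 1];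
      [:: 1; 2; 1; 1; 2; 1; 2]; [:: 1; 2; 1; 1; 2; 2; 1];
      [:: 1; 2; 1; 2; 2; 1; 1]], [:: 2; 1; 2; 1; 2; 1; 1]);
  ([:: [:: 1; 1; 1; 2; 1; 1; 2]; [:: 1; 1; 1; 2; 1; 2; 1]; [:: 1; 1; 1; 2; 2; 1; 1];
      [:: 1; 2; 1; 2; 1; 1; 1]; [:: 1; 1; 1; 2; 1; 1; 1]], [:: [:: 1; 1; 1; 2; 1; 2; 2];
      [:: 1; 1; 1; 2; 2; 1; 2]; [:: 1; 1; 1; 2; 2; 2; 1]; [:: 1; 1; 1; 4; 1; 1; 1];
      [:: 1; 2; 1; 2; 1; 1; 2]; [:: 1; 2; 1; 2; 1; 2; 1];
      [:: 1; 2; 1; 2; 2; 1; 1]], [:: 2; 1; 2; 2; 1; 1; 1]);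
  ([:: [:: 1; 1; 1; 1; 1; 2; 2]; [:: 1; 1; 1; 1; 2; 1; 2]; [:: 1; 1; 1; 2; 1; 1; 2];
      [:: 1; 1; 2; 1; 1; 1; 2]; [:: 1; 1; 1; 1; 1; 1; 2]], [:: [:: 1; 1; 1; 1; 1; 1; 4];
      [:: 1; 1; 1; 1; 2; 2; 2]; [:: 1; 1; 1; 2; 1; 2; 2]; [:: 1; 1; 1; 2; 2; 1; 2];
      [:: 1; 1; 2; 1; 1; 2; 2]; [:: 1; 1; 2; 1; 2; 1; 2];
      [:: 1; 1; 2; 2; 1; 1; 2]], [:: 2; 2; 1; 1; 1; 1; 2]);
  ([:: [:: 1; 1; 1; 1; 1; 2; 2]; [:: 1; 1; 1; 1; 2; 2; 1]; [:: 1; 1; 1; 2; 1; 2; 1];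
      [:: 1; 1; 2; 1; 1; 2; 1]; [:: 1; 1; 1; 1; 1; 2; 1]], [:: [:: 1; 1; 1; 1; 1; 4; 1];
      [:: 1; 1; 1; 1; 2; 2; 2]; [:: 1; 1; 1; 2; 1; 2; 2]; [:: 1; 1; 1; 2; 2; 2; 1];
      [:: 1; 1; 2; 1; 1; 2; 2]; [:: 1; 1; 2; 1; 2; 2; 1];
      [:: 1; 1; 2; 2; 1; 2; 1]], [:: 2; 2; 1; 1; 1; 2; 1]);
  ([:: [:: 1; 1; 1; 1; 2; 1; 2]; [:: 1; 1; 1; 1; 2; 2; 1]; [:: 1; 1; 1; 2; 2; 1; 1];
      [:: 1; 1; 2; 1; 2; 1; 1]; [:: 1; 1; 1; 1; 2; 1; 1]], [:: [:: 1; 1; 1; 1; 2; 2; 2];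
      [:: 1; 1; 1; 1; 4; 1; 1]; [:: 1; 1; 1; 2; 2; 1; 2]; [:: 1; 1; 1; 2; 2; 2; 1];
      [:: 1; 1; 2; 1; 2; 1; 2]; [:: 1; 1; 2; 1; 2; 2; 1];
      [:: 1; 1; 2; 2; 2; 1; 1]], [:: 2; 2; 1; 1; 2; 1; 1]);
  ([:: [:: 1; 1; 1; 2; 1; 1; 2]; [:: 1; 1; 1; 2; 1; 2; 1]; [:: 1; 1; 1; 2; 2; 1; 1];
      [:: 1; 1; 2; 2; 1; 1; 1]; [:: 1; 1; 1; 2; 1; 1; 1]], [:: [:: 1; 1; 1; 2; 1; 2; 2];
      [:: 1; 1; 1; 2; 2; 1; 2]; [:: 1; 1; 1; 2; 2; 2; 1]; [:: 1; 1; 1; 4; 1; 1; 1];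
      [:: 1; 1; 2; 2; 1; 1; 2]; [:: 1; 1; 2; 2; 1; 2; 1];
      [:: 1; 1; 2; 2; 2; 1; 1]], [:: 2; 2; 1; 2; 1; 1; 1]);
  ([:: [:: 1; 1; 2; 1; 1; 1; 2]; [:: 1; 1; 2; 1; 1; 2; 1]; [:: 1; 1; 2; 1; 2; 1; 1];
      [:: 1; 1; 2; 2; 1; 1; 1]; [:: 1; 2; 1; 1; 1; 1; 2]; [:: 1; 2; 1; 1; 1; 2; 1];
      [:: 1; 2; 1; 1; 2; 1; 1]; [:: 1; 2; 1; 2; 1; 1; 1]; [:: 1; 2; 2; 1; 1; 1; 1];
      [:: 1; 1; 1; 1; 1; 1; 2]; [:: 1; 1; 1; 1; 1; 2; 1]; [:: 1; 1; 1; 1; 2; 1; 1];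
      [:: 1; 1; 1; 2; 1; 1; 1]], [:: [:: 1; 1; 1; 1; 1; 1; 4]; [:: 1; 1; 1; 1; 1; 4; 1];
      [:: 1; 1; 1; 1; 2; 2; 2]; [:: 1; 1; 1; 1; 4; 1; 1]; [:: 1; 1; 1; 2; 1; 2; 2];
      [:: 1; 1; 1; 2; 2; 1; 2]; [:: 1; 1; 1; 2; 2; 2; 1];
      [:: 1; 1; 1; 4; 1; 1; 1]], [:: 2; 2; 2; 1; 1; 1; 1]);
  ([:: [:: 1; 1; 1; 1; 1; 2; 2]; [:: 1; 1; 1; 1; 2; 1; 2]; [:: 1; 1; 1; 1; 2; 2; 1];
      [:: 1; 1; 1; 2; 1; 1; 2]; [:: 1; 1; 1; 2; 1; 2; 1]; [:: 1; 1; 1; 2; 2; 1; 1];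
      [:: 1; 2; 2; 1; 1; 1; 1]; [:: 3; 1; 1; 1; 1; 1; 1]; [:: 1; 1; 1; 1; 1; 1; 2];
      [:: 1; 1; 1; 1; 1; 2; 1]; [:: 1; 1; 1; 1; 2; 1; 1]; [:: 1; 1; 1; 2; 1; 1; 1];
      [:: 2; 1; 1; 1; 1; 1; 1]], [:: [:: 1; 1; 1; 1; 1; 1; 4]; [:: 1; 1; 1; 1; 1; 4; 1];
      [:: 1; 1; 1; 1; 4; 1; 1]; [:: 1; 1; 1; 4; 1; 1; 1]; [:: 1; 1; 2; 1; 1; 2; 2];
      [:: 1; 1; 2; 1; 2; 1; 2]; [:: 1; 1; 2; 1; 2; 2; 1]; [:: 1; 1; 2; 2; 1; 1; 2];
      [:: 1; 1; 2; 2; 1; 2; 1]; [:: 1; 1; 2; 2; 2; 1; 1]; [:: 1; 2; 1; 1; 1; 2; 2];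
      [:: 1; 2; 1; 1; 2; 1; 2]; [:: 1; 2; 1; 1; 2; 2; 1]; [:: 1; 2; 1; 2; 1; 1; 2];
      [:: 1; 2; 1; 2; 1; 2; 1]; [:: 1; 2; 1; 2; 2; 1; 1]], [:: 3; 1; 1; 1; 1; 1; 2]);
  ([:: [:: 1; 1; 1; 1; 1; 2; 2]; [:: 1; 1; 1; 1; 2; 1; 2]; [:: 1; 1; 1; 1; 2; 2; 1];
      [:: 1; 1; 1; 2; 1; 1; 2]; [:: 1; 1; 1; 2; 1; 2; 1]; [:: 1; 1; 1; 2; 2; 1; 1];
      [:: 1; 2; 2; 1; 1; 1; 1]; [:: 1; 1; 1; 1; 1; 1; 2]; [:: 1; 1; 1; 1; 1; 2; 1];
      [:: 1; 1; 1; 1; 2; 1; 1]; [:: 1; 1; 1; 2; 1; 1; 1];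
      [:: 2; 1; 1; 1; 1; 1; 1]], [:: [:: 1; 1; 1; 1; 1; 1; 4]; [:: 1; 1; 1; 1; 1; 4; 1];
      [:: 1; 1; 1; 1; 4; 1; 1]; [:: 1; 1; 1; 4; 1; 1; 1]; [:: 1; 1; 2; 1; 1; 2; 2];
      [:: 1; 1; 2; 1; 2; 1; 2]; [:: 1; 1; 2; 1; 2; 2; 1]; [:: 1; 1; 2; 2; 1; 1; 2];
      [:: 1; 1; 2; 2; 1; 2; 1]; [:: 1; 1; 2; 2; 2; 1; 1]; [:: 1; 2; 1; 1; 1; 2; 2];
      [:: 1; 2; 1; 1; 2; 1; 2]; [:: 1; 2; 1; 1; 2; 2; 1]; [:: 1; 2; 1; 2; 1; 1; 2];
      [:: 1; 2; 1; 2; 1; 2; 1]; [:: 1; 2; 1; 2; 2; 1; 1]], [:: 4; 1; 1; 1; 1; 1; 1])].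

Definition qcert_8_5 : quot_cert :=
  [:: ([:: [:: 1; 1; 1; 1; 1; 1; 2; 2]; [:: 1; 2; 2; 1; 1; 1; 1; 1]; [:: 2; 1; 1; 1; 1; 1; 1; 2];
      [:: 2; 1; 1; 1; 1; 1; 2; 1]; [:: 2; 1; 2; 1; 1; 1; 1; 1];
      [:: 2; 2; 1; 1; 1; 1; 1; 1]], [:: 1; 1; 1; 1; 1; 1; 2; 2]);
  ([:: [:: 1; 1; 1; 1; 1; 2; 1; 2]; [:: 1; 2; 2; 1; 1; 1; 1; 1]; [:: 2; 1; 1; 1; 1; 1; 1; 2];
      [:: 2; 1; 1; 1; 1; 2; 1; 1]; [:: 2; 1; 2; 1; 1; 1; 1; 1];
      [:: 2; 2; 1; 1; 1; 1; 1; 1]], [:: 1; 1; 1; 1; 1; 2; 1; 2]);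
  ([:: [:: 1; 1; 1; 1; 1; 2; 2; 1]; [:: 1; 2; 2; 1; 1; 1; 1; 1]; [:: 2; 1; 1; 1; 1; 1; 2; 1];
      [:: 2; 1; 1; 1; 1; 2; 1; 1]; [:: 2; 1; 2; 1; 1; 1; 1; 1];
      [:: 2; 2; 1; 1; 1; 1; 1; 1]], [:: 1; 1; 1; 1; 1; 2; 2; 1]);
  ([:: [:: 1; 1; 1; 1; 2; 1; 1; 2]; [:: 1; 2; 2; 1; 1; 1; 1; 1]; [:: 2; 1; 1; 1; 1; 1; 1; 2];
      [:: 2; 1; 1; 1; 2; 1; 1; 1]; [:: 2; 1; 2; 1; 1; 1; 1; 1];
      [:: 2; 2; 1; 1; 1; 1; 1; 1]], [:: 1; 1; 1; 1; 2; 1; 1; 2]);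
  ([:: [:: 1; 1; 1; 1; 2; 1; 2; 1]; [:: 1; 2; 2; 1; 1; 1; 1; 1]; [:: 2; 1; 1; 1; 1; 1; 2; 1];
      [:: 2; 1; 1; 1; 2; 1; 1; 1]; [:: 2; 1; 2; 1; 1; 1; 1; 1];
      [:: 2; 2; 1; 1; 1; 1; 1; 1]], [:: 1; 1; 1; 1; 2; 1; 2; 1]);
  ([:: [:: 1; 1; 1; 1; 2; 2; 1; 1]; [:: 1; 2; 2; 1; 1; 1; 1; 1]; [:: 2; 1; 1; 1; 1; 2; 1; 1];
      [:: 2; 1; 1; 1; 2; 1; 1; 1]; [:: 2; 1; 2; 1; 1; 1; 1; 1];
      [:: 2; 2; 1; 1; 1; 1; 1; 1]], [:: 1; 1; 1; 1; 2; 2; 1; 1]);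
  ([:: [:: 1; 1; 1; 2; 1; 1; 1; 2]; [:: 1; 2; 2; 1; 1; 1; 1; 1]; [:: 2; 1; 1; 1; 1; 1; 1; 2];
      [:: 2; 1; 1; 2; 1; 1; 1; 1]; [:: 2; 1; 2; 1; 1; 1; 1; 1];
      [:: 2; 2; 1; 1; 1; 1; 1; 1]], [:: 1; 1; 1; 2; 1; 1; 1; 2]);
  ([:: [:: 1; 1; 1; 2; 1; 1; 2; 1]; [:: 1; 2; 2; 1; 1; 1; 1; 1]; [:: 2; 1; 1; 1; 1; 1; 2; 1];
      [:: 2; 1; 1; 2; 1; 1; 1; 1]; [:: 2; 1; 2; 1; 1; 1; 1; 1];
      [:: 2; 2; 1; 1; 1; 1; 1; 1]], [:: 1; 1; 1; 2; 1; 1; 2; 1]);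
  ([:: [:: 1; 1; 1; 2; 1; 2; 1; 1]; [:: 1; 2; 2; 1; 1; 1; 1; 1]; [:: 2; 1; 1; 1; 1; 2; 1; 1];
      [:: 2; 1; 1; 2; 1; 1; 1; 1]; [:: 2; 1; 2; 1; 1; 1; 1; 1];
      [:: 2; 2; 1; 1; 1; 1; 1; 1]], [:: 1; 1; 1; 2; 1; 2; 1; 1]);
  ([:: [:: 1; 1; 1; 2; 2; 1; 1; 1]; [:: 1; 2; 2; 1; 1; 1; 1; 1]; [:: 2; 1; 1; 1; 2; 1; 1; 1];
      [:: 2; 1; 1; 2; 1; 1; 1; 1]; [:: 2; 1; 2; 1; 1; 1; 1; 1];
      [:: 2; 2; 1; 1; 1; 1; 1; 1]], [:: 1; 1; 1; 2; 2; 1; 1; 1]);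
  ([:: [:: 1; 1; 2; 1; 1; 1; 1; 2]; [:: 1; 2; 2; 1; 1; 1; 1; 1]; [:: 2; 1; 1; 1; 1; 1; 1; 2];
      [:: 2; 2; 1; 1; 1; 1; 1; 1]], [:: 1; 1; 2; 1; 1; 1; 1; 2]);
  ([:: [:: 1; 1; 2; 1; 1; 1; 2; 1]; [:: 1; 2; 2; 1; 1; 1; 1; 1]; [:: 2; 1; 1; 1; 1; 1; 2; 1];
      [:: 2; 2; 1; 1; 1; 1; 1; 1]], [:: 1; 1; 2; 1; 1; 1; 2; 1]);
  ([:: [:: 1; 1; 2; 1; 1; 2; 1; 1]; [:: 1; 2; 2; 1; 1; 1; 1; 1]; [:: 2; 1; 1; 1; 1; 2; 1; 1];
      [:: 2; 2; 1; 1; 1; 1; 1; 1]], [:: 1; 1; 2; 1; 1; 2; 1; 1]);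
  ([:: [:: 1; 1; 2; 1; 2; 1; 1; 1]; [:: 1; 2; 2; 1; 1; 1; 1; 1]; [:: 2; 1; 1; 1; 2; 1; 1; 1];
      [:: 2; 2; 1; 1; 1; 1; 1; 1]], [:: 1; 1; 2; 1; 2; 1; 1; 1]);
  ([:: [:: 1; 1; 2; 2; 1; 1; 1; 1]; [:: 1; 2; 2; 1; 1; 1; 1; 1]; [:: 2; 1; 1; 2; 1; 1; 1; 1];
      [:: 2; 2; 1; 1; 1; 1; 1; 1]], [:: 1; 1; 2; 2; 1; 1; 1; 1]);
  ([:: [:: 1; 2; 1; 1; 1; 1; 1; 2]; [:: 1; 2; 2; 1; 1; 1; 1; 1]; [:: 2; 1; 1; 1; 1; 1; 1; 2];
      [:: 2; 1; 2; 1; 1; 1; 1; 1]], [:: 1; 2; 1; 1; 1; 1; 1; 2]);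
  ([:: [:: 1; 2; 1; 1; 1; 1; 2; 1]; [:: 1; 2; 2; 1; 1; 1; 1; 1]; [:: 2; 1; 1; 1; 1; 1; 2; 1];
      [:: 2; 1; 2; 1; 1; 1; 1; 1]], [:: 1; 2; 1; 1; 1; 1; 2; 1]);
  ([:: [:: 1; 2; 1; 1; 1; 2; 1; 1]; [:: 1; 2; 2; 1; 1; 1; 1; 1]; [:: 2; 1; 1; 1; 1; 2; 1; 1];
      [:: 2; 1; 2; 1; 1; 1; 1; 1]], [:: 1; 2; 1; 1; 1; 2; 1; 1]);
  ([:: [:: 1; 2; 1; 1; 2; 1; 1; 1]; [:: 1; 2; 2; 1; 1; 1; 1; 1]; [:: 2; 1; 1; 1; 2; 1; 1; 1];
      [:: 2; 1; 2; 1; 1; 1; 1; 1]], [:: 1; 2; 1; 1; 2; 1; 1; 1]);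
  ([:: [:: 1; 2; 1; 2; 1; 1; 1; 1]; [:: 1; 2; 2; 1; 1; 1; 1; 1]; [:: 2; 1; 1; 2; 1; 1; 1; 1];
      [:: 2; 1; 2; 1; 1; 1; 1; 1]], [:: 1; 2; 1; 2; 1; 1; 1; 1])].

Definition scert_8_5 : sub_cert :=
  [:: ([:: [:: 1; 1; 1; 1; 1; 1; 1; 2]; [:: 1; 1; 1; 1; 1; 1; 2; 1];
      [:: 1; 1; 1; 1; 1; 1; 1; 1]], [:: ], [:: 1; 1; 1; 1; 1; 1; 2; 2]);
  ([:: [:: 1; 1; 1; 1; 1; 1; 1; 2]; [:: 1; 1; 1; 1; 1; 2; 1; 1];
      [:: 1; 1; 1; 1; 1; 1; 1; 1]], [:: ], [:: 1; 1; 1; 1; 1; 2; 1; 2]);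
  ([:: [:: 1; 1; 1; 1; 1; 1; 1; 2];
      [:: 1; 1; 1; 1; 1; 1; 1; 1]], [:: ], [:: 1; 1; 1; 1; 1; 2; 2; 1]);
  ([:: [:: 1; 1; 1; 1; 2; 1; 1; 1]], [:: ], [:: 1; 1; 1; 1; 2; 1; 1; 2]);
  ([:: [:: 1; 1; 1; 2; 1; 1; 1; 1]], [:: ], [:: 1; 1; 1; 2; 1; 1; 1; 2]);
  ([:: [:: 1; 1; 2; 1; 1; 1; 1; 1]], [:: ], [:: 1; 1; 2; 1; 1; 1; 1; 2]);
  ([:: [:: 1; 2; 1; 1; 1; 1; 1; 1]], [:: ], [:: 1; 2; 1; 1; 1; 1; 1; 2]);
  ([:: [:: 1; 1; 1; 1; 1; 1; 1; 2]; [:: 1; 1; 1; 1; 1; 1; 2; 1]; [:: 1; 1; 1; 1; 1; 2; 1; 1];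
      [:: 1; 1; 1; 1; 2; 1; 1; 1]; [:: 1; 1; 1; 2; 1; 1; 1; 1]; [:: 1; 1; 2; 1; 1; 1; 1; 1];
      [:: 1; 2; 1; 1; 1; 1; 1; 1]], [:: ], [:: 2; 1; 1; 1; 1; 1; 1; 2])].

Definition no_cert : quot_cert * sub_cert := ([::], [::]).

Definition certs_7 : seq (quot_cert * sub_cert) :=
  [:: no_cert; no_cert; no_cert; (qcert_7_4, scert_7_4); (qcert_7_5, scert_7_5)].

Definition certs_8 : seq (quot_cert * sub_cert) :=
  [:: no_cert; no_cert; no_cert; no_cert; (qcert_8_5, scert_8_5)].

Theorem mainTheorem8 :
  [/\ map (dimQP 7 10) omegas = [:: 0; 0; 0; 20; 35]%N,
      map (dimQP 8 10) omegas = [:: 0; 0; 0; 0; 20]%N &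
      forall h : nat, (9 <= h)%N -> forall s, s \in omegas -> dimQP h 10 s = 0%N].
Proof.
split.
- by rewrite (@map_dimQP_cert _ _ _ certs_7); vm_compute.
- by rewrite (@map_dimQP_cert _ _ _ certs_8); vm_compute.
- move=> h le9h s s_in; apply: dimQP_small_weight0 => //.
  have /allP w0_le6 : all (fun s => wvec s 0 <= 6) omegas by [].
  by have := w0_le6 s s_in; lia.
Qed.
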